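(* Let $r_1,r_2$ be $2\pi$-periodic, bounded and piecewise $C^1$, let $\nu>0$, $\mu>0$, and let $(x_1(t),x_2(t))$ be the solution of $$\frac{dx_1}{dt}=r_1(\nu t)x_1+\mu(x_2-x_1),\qquad \frac{dx_2}{dt}=r_2(\nu t)x_2+\mu(x_1-x_2)$$ with $x_1(0)>0$, $x_2(0)>0$. Then the limit $\Delta(\nu,\mu)=\lim_{t\to\infty}\frac{\ln(x_1(t)x_2(t))}{t}$ exists, is independent of the positive initial condition, and $$\Delta(\nu,\mu)=\frac{1}{2\pi}\int_0^{2\pi}\Big(r_1(s)+r_2(s)+\sqrt{m^2+y_m(s)^2}-m\Big)\,ds,\qquad m=2\mu,$$ where $y_m$ is the unique $2\pi$-periodic solution of $$\frac{dy}{dt}=\frac{1}{\nu}\sqrt{m^2+y^2}\,\big(r_1(t)-r_2(t)-y\big).$$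
   Context: Piecewise $C^1$: there is a discrete sequence of points outside of which the function is the restriction of a $C^1$ function with bounded derivative. *)

From Stdlib Require Import Reals List.
From Coquelicot Require Import Coquelicot.
Open Scope R_scope.

(* A set of reals is discrete in the sense of "a discrete sequence of points":
   every bounded interval contains only finitely many of its points. *)
Definition locally_finite (S : R -> Prop) : Prop :=
  forall a b : R, exists l : list R, forall x, a <= x <= b -> S x -> In x l.

Definition C1_bounded_deriv (g : R -> R) : Prop :=
  (forall x, ex_derive g x /\ continuous (Derive g) x) /\
  (exists M, forall x, Rabs (Derive g x) <= M).

Definition piecewise_C1 (f : R -> R) : Prop :=
  exists S : R -> Prop, locally_finite S /\
    forall a b : R, a < b -> (forall x, a < x < b -> ~ S x) ->
      exists g, C1_bounded_deriv g /\ forall x, a < x < b -> f x = g x.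

Definition periodic_2pi (f : R -> R) : Prop := forall t, f (t + 2 * PI) = f t.

Definition bounded_fun (f : R -> R) : Prop := exists M, forall t, Rabs (f t) <= M.

(* (x1,x2) solves the system on [0,+oo) (Carathéodory / integral form):
   x_i(t) = x_i(0) + \int_0^t RHS_i(s) ds for all t >= 0. *)
Definition is_solution (r1 r2 : R -> R) (nu mu : R) (x1 x2 : R -> R) : Prop :=
  forall t, 0 <= t ->
    is_RInt (fun s => r1 (nu * s) * x1 s + mu * (x2 s - x1 s)) 0 t (x1 t - x1 0) /\
    is_RInt (fun s => r2 (nu * s) * x2 s + mu * (x1 s - x2 s)) 0 t (x2 t - x2 0).

Definition is_y_solution (r1 r2 : R -> R) (nu m : R) (y : R -> R) : Prop :=
  forall t,
    is_RInt (fun s => / nu * sqrt (m ^ 2 + y s ^ 2) * (r1 s - r2 s - y s)) 0 t (y t - y 0).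

(* The substitution [y = m sinh z] turns the y-equation into
   [z' = (r1 - r2 - m sinh z) / nu], which contracts because [sinh] is increasing: two
   solutions approach each other like [exp (- m t / nu)]. The return map over one period
   maps [[-A, A]] into itself for [A = (M1 + M2) / m], so it has a fixed point (intermediate
   value theorem), which is the periodic solution; contraction makes it unique.
   For the x-system, [z = ln (x1 / x2)] solves the same equation in the time [nu t] and
   [u = ln (x1 x2)] satisfies [u' = r1 + r2 + m cosh z - m]. Hence [ln (x1 x2) / t] is a time
   average of that expression, in which [z] may be replaced by the periodic solution up to an
   exponentially decaying error, and the average of a periodic function tends to its mean.
   Solutions are built by Picard iteration, with [sinh] frozen outside the invariant band,
   and identified with the given ones by Gronwall's inequality. *)

From Stdlib Require Import Reals Lra Lia List ZArith.
From Coquelicot Require Import Coquelicot.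
Open Scope R_scope.

Lemma locally_of_Rabs (x : R) (P : R -> Prop) :
  (exists d, 0 < d /\ forall y, Rabs (y - x) < d -> P y) -> locally x P.
Proof. intros [d [Hd H]]. exists (mkposreal d Hd). intros y Hy. apply H. exact Hy. Qed.

Lemma locally_open_interval p q t : p < t < q -> locally t (fun s => p < s < q).
Proof.
  intros H. apply locally_of_Rabs. exists (Rmin (t - p) (q - t)). split.
  - unfold Rmin; destruct Rle_dec; lra.
  - intros y Hy. unfold Rmin in Hy; destruct Rle_dec in Hy;
      unfold Rabs in Hy; destruct Rcase_abs in Hy; lra.
Qed.

Lemma lipschitz_continuous (f : R -> R) (M : R) x :
  (forall s t, Rabs (f s - f t) <= M * Rabs (s - t)) -> continuous f x.
Proof.
  intros H. apply filterlim_locally. intros eps.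
  apply locally_of_Rabs. exists (eps / (Rabs M + 1)). split.
  { apply Rdiv_lt_0_compat. apply cond_pos. pose proof (Rabs_pos M); lra. }
  intros y Hy. change (Rabs (f y - f x) < eps).
  eapply Rle_lt_trans. apply H.
  pose proof (Rabs_pos M). pose proof (Rabs_pos (y - x)). pose proof (cond_pos eps).
  apply Rle_lt_trans with ((Rabs M + 1) * Rabs (y - x)).
  { assert (M <= Rabs M) by apply RRle_abs. nra. }
  apply Rmult_lt_reg_r with (/ (Rabs M + 1)). apply Rinv_0_lt_compat; lra.
  rewrite (Rmult_comm (Rabs M + 1)), Rmult_assoc, Rinv_r by lra. lra.
Qed.

Lemma continuous_of_ex_derive (f : R -> R) : (forall x, ex_derive f x) -> forall x, continuous f x.
Proof. intros H x. apply (ex_derive_continuous (K:=R_AbsRing) (V:=R_NormedModule)). auto. Qed.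

(* Side conditions of [auto_derive] for an abstract [f] with a hypothesis [is_derive f t l]. *)
Ltac solve_ex_derive := repeat split; eexists; eassumption.
Ltac rewrite_Derive H := match type of H with is_derive ?f ?t ?l =>
  replace (Derive (fun x => f x) t) with l by (symmetry; apply is_derive_unique; exact H) end.

(** * Continuity on segments and piecewise continuity *)

Definition clamp (a b s : R) := Rmax a (Rmin b s).

Lemma clamp_id a b s : a <= s <= b -> clamp a b s = s.
Proof. intros. unfold clamp, Rmax, Rmin. repeat destruct Rle_dec; lra. Qed.

Lemma clamp_range a b s : a <= b -> a <= clamp a b s <= b.
Proof. intros. unfold clamp, Rmax, Rmin. repeat destruct Rle_dec; lra. Qed.

Lemma clamp_lipschitz a b s t : a <= b -> Rabs (clamp a b s - clamp a b t) <= 1 * Rabs (s - t).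
Proof.
  intros. unfold clamp, Rmax, Rmin.
  repeat destruct Rle_dec; unfold Rabs; repeat destruct Rcase_abs; lra.
Qed.

Lemma continuous_clamp a b x : a <= b -> continuous (clamp a b) x.
Proof. intros. apply lipschitz_continuous with 1. intros; apply clamp_lipschitz; auto. Qed.

(* Continuity of the restriction of [F] to [[a, b]], encoded as continuity of [F] after
   clamping its argument into [[a, b]]; solutions are only known on [[0, t]]. *)
Definition seg_continuous (a b : R) (F : R -> R) :=
  forall t, continuous (fun s => F (clamp a b s)) t.

Lemma seg_continuous_of_continuous a b F :
  (forall t, continuous F t) -> a <= b -> seg_continuous a b F.
Proof. intros H Hab t. apply continuous_comp. apply continuous_clamp; auto. apply H. Qed.

Lemma seg_continuous_sub a b a' b' F :
  seg_continuous a b F -> a <= a' -> a' <= b' -> b' <= b -> seg_continuous a' b' F.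
Proof.
  intros H H1 H2 H3 t.
  apply continuous_ext with (fun s => F (clamp a b (clamp a' b' s))).
  { intros s. f_equal. apply clamp_id. pose proof (clamp_range a' b' s H2). lra. }
  apply continuous_comp with (f := clamp a' b') (g := fun s => F (clamp a b s)).
  apply continuous_clamp; auto. apply H.
Qed.

Lemma seg_continuous_ext a b F G : seg_continuous a b F -> (forall x, F x = G x) -> seg_continuous a b G.
Proof. intros H E t. apply continuous_ext with (fun s => F (clamp a b s)). intros; apply E. apply H. Qed.

Lemma seg_continuous_comp a b F (phi : R -> R) :
  seg_continuous a b F -> (forall x, continuous phi x) -> seg_continuous a b (fun s => phi (F s)).
Proof. intros H Hp t. apply continuous_comp with (f := fun s => F (clamp a b s)). apply H. apply Hp. Qed.

Lemma seg_continuous_plus a b F G :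
  seg_continuous a b F -> seg_continuous a b G -> seg_continuous a b (fun s => F s + G s).
Proof. intros H1 H2 t. apply (continuous_plus (fun s => F (clamp a b s)) (fun s => G (clamp a b s))); auto. Qed.

Lemma seg_continuous_mult a b F G :
  seg_continuous a b F -> seg_continuous a b G -> seg_continuous a b (fun s => F s * G s).
Proof. intros H1 H2 t. apply (continuous_mult (fun s => F (clamp a b s)) (fun s => G (clamp a b s))); auto. Qed.

Lemma seg_continuous_const a b k : seg_continuous a b (fun _ => k).
Proof. intros t. apply continuous_const. Qed.

Lemma seg_continuous_minus a b F G :
  seg_continuous a b F -> seg_continuous a b G -> seg_continuous a b (fun s => F s - G s).
Proof.
  intros H1 H2. apply seg_continuous_ext with (fun s => F s + (-1) * G s). 2: intros; ring.
  apply seg_continuous_plus; auto. apply seg_continuous_mult; auto. apply seg_continuous_const.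
Qed.

Lemma seg_continuous_scal a b k F : seg_continuous a b F -> seg_continuous a b (fun s => k * F s).
Proof. intros. apply seg_continuous_mult; auto. apply seg_continuous_const. Qed.

Definition pc_on (l : list R) (a b : R) (f : R -> R) :=
  forall p q, a <= p -> p < q -> q <= b -> (forall y, In y l -> ~ (p < y < q)) ->
    exists g : R -> R, (forall x, continuous g x) /\ (forall x, p < x < q -> f x = g x).

Definition piecewise_continuous (f : R -> R) := forall a b, exists l, pc_on l a b f.

Lemma pc_on_weaken l l' a b a' b' f :
  pc_on l a b f -> incl l l' -> a <= a' -> b' <= b -> pc_on l' a' b' f.
Proof.
  intros H Hi H1 H2 p q Hp Hpq Hq Hy. apply H; try lra.
  intros y Hy'. apply Hy. apply Hi. auto.
Qed.

Lemma pc_on_of_seg_continuous l a b F : seg_continuous a b F -> pc_on l a b F.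
Proof.
  intros H p q Hp Hpq Hq _. exists (fun s => F (clamp a b s)). split. apply H.
  intros x Hx. rewrite clamp_id; auto. lra.
Qed.

Lemma pc_on_ext l a b f g : pc_on l a b f -> (forall x, f x = g x) -> pc_on l a b g.
Proof.
  intros H E p q H1 H2 H3 H4. destruct (H p q H1 H2 H3 H4) as [h [Hh Eh]].
  exists h. split; auto. intros x Hx. rewrite <- E; auto.
Qed.

Lemma pc_on_comp l a b f (phi : R -> R) :
  pc_on l a b f -> (forall x, continuous phi x) -> pc_on l a b (fun s => phi (f s)).
Proof.
  intros H Hp p q H1 H2 H3 H4. destruct (H p q H1 H2 H3 H4) as [g [Hg Heq]].
  exists (fun s => phi (g s)). split. intros x. apply continuous_comp; auto.
  intros x Hx. rewrite Heq; auto.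
Qed.

Lemma pc_on_op2 l a b f1 f2 (op : R -> R -> R) :
  (forall g1 g2 : R -> R, (forall x, continuous g1 x) -> (forall x, continuous g2 x) ->
      forall x, continuous (fun s => op (g1 s) (g2 s)) x) ->
  pc_on l a b f1 -> pc_on l a b f2 -> pc_on l a b (fun s => op (f1 s) (f2 s)).
Proof.
  intros Hop H1 H2 p q Hp Hpq Hq Hy.
  destruct (H1 p q Hp Hpq Hq Hy) as [g1 [Hg1 E1]].
  destruct (H2 p q Hp Hpq Hq Hy) as [g2 [Hg2 E2]].
  exists (fun s => op (g1 s) (g2 s)). split. apply Hop; auto.
  intros x Hx. rewrite E1, E2; auto.
Qed.

Lemma pc_on_plus l a b f g : pc_on l a b f -> pc_on l a b g -> pc_on l a b (fun s => f s + g s).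
Proof. apply pc_on_op2. intros g1 g2 H1 H2 x. apply (continuous_plus g1 g2); auto. Qed.

Lemma pc_on_mult l a b f g : pc_on l a b f -> pc_on l a b g -> pc_on l a b (fun s => f s * g s).
Proof. apply pc_on_op2. intros g1 g2 H1 H2 x. apply (continuous_mult g1 g2); auto. Qed.

Lemma pc_on_mult_seg l a b k f : seg_continuous a b k -> pc_on l a b f -> pc_on l a b (fun s => k s * f s).
Proof. intros. apply pc_on_mult; auto. apply pc_on_of_seg_continuous; auto. Qed.

Lemma pc_on_plus_seg l a b k f : seg_continuous a b k -> pc_on l a b f -> pc_on l a b (fun s => k s + f s).
Proof. intros. apply pc_on_plus; auto. apply pc_on_of_seg_continuous; auto. Qed.

Lemma pc_on_split x l a b f :
  pc_on (x :: l) a b f -> forall a' b', a <= a' -> b' <= b -> (x <= a' \/ b' <= x) -> pc_on l a' b' f.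
Proof.
  intros H a' b' H1 H2 H3 p q Hp Hpq Hq Hy. apply H; try lra.
  intros y [<-|Hy']; [lra | apply Hy; auto].
Qed.

Lemma ex_RInt_pc_on l : forall a b f, pc_on l a b f -> a <= b -> ex_RInt f a b.
Proof.
  induction l as [|x l IH]; intros a b f H Hab.
  - destruct (Req_dec a b) as [E|E].
    + subst. apply ex_RInt_point.
    + destruct (H a b) as [g [Hg Eg]]; try lra. intros y [].
      apply ex_RInt_ext with g.
      { intros z Hz. rewrite Rmin_left, Rmax_right in Hz by lra. symmetry; apply Eg; auto. }
      apply (ex_RInt_continuous (V:=R_CompleteNormedModule)). intros; apply Hg.
  - pose proof (pc_on_split x l a b f H) as Hs.
    destruct (Rlt_dec a x); [destruct (Rlt_dec x b)|].
    + apply ex_RInt_Chasles with x; apply IH; try apply Hs; lra.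
    + apply IH; try apply Hs; lra.
    + apply IH; try apply Hs; lra.
Qed.

Lemma piecewise_continuous_plus f g :
  piecewise_continuous f -> piecewise_continuous g -> piecewise_continuous (fun s => f s + g s).
Proof.
  intros Hf Hg a b. destruct (Hf a b) as [l1 H1]. destruct (Hg a b) as [l2 H2]. exists (l1 ++ l2).
  apply pc_on_plus; eapply pc_on_weaken; eauto; try lra; intros y Hy; apply in_or_app; auto.
Qed.

Lemma piecewise_continuous_mult f g :
  piecewise_continuous f -> piecewise_continuous g -> piecewise_continuous (fun s => f s * g s).
Proof.
  intros Hf Hg a b. destruct (Hf a b) as [l1 H1]. destruct (Hg a b) as [l2 H2]. exists (l1 ++ l2).
  apply pc_on_mult; eapply pc_on_weaken; eauto; try lra; intros y Hy; apply in_or_app; auto.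
Qed.

Lemma piecewise_continuous_of_continuous f : (forall x, continuous f x) -> piecewise_continuous f.
Proof. intros H a b. exists nil. intros p q _ _ _ _. exists f. split; auto. Qed.

Lemma piecewise_continuous_ext f g :
  piecewise_continuous f -> (forall x, f x = g x) -> piecewise_continuous g.
Proof. intros H E a b. destruct (H a b) as [l Hl]. exists l. apply pc_on_ext with f; auto. Qed.

Lemma piecewise_continuous_ex_RInt f : piecewise_continuous f -> forall u v, ex_RInt f u v.
Proof.
  intros H. assert (Hle : forall u v, u <= v -> ex_RInt f u v).
  { intros u v Huv. destruct (H u v) as [l Hl]. apply ex_RInt_pc_on with l; auto. }
  intros u v. destruct (Rle_dec u v). auto. apply ex_RInt_swap. apply Hle. lra.
Qed.

Lemma piecewise_continuous_plus_continuous f g :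
  piecewise_continuous f -> (forall x, continuous g x) -> piecewise_continuous (fun s => f s + g s).
Proof. intros. apply piecewise_continuous_plus; auto. apply piecewise_continuous_of_continuous; auto. Qed.

Lemma piecewise_continuous_scal k f :
  piecewise_continuous f -> piecewise_continuous (fun s => k * f s).
Proof.
  intros. apply piecewise_continuous_mult; auto.
  apply piecewise_continuous_of_continuous. intros; apply continuous_const.
Qed.

Lemma piecewise_continuous_minus f g :
  piecewise_continuous f -> piecewise_continuous g -> piecewise_continuous (fun s => f s - g s).
Proof.
  intros. apply piecewise_continuous_ext with (fun s => f s + (-1) * g s). 2: intros; ring.
  apply piecewise_continuous_plus; auto. apply piecewise_continuous_scal; auto.
Qed.

Lemma piecewise_continuous_of_C1_scaled f al :
  piecewise_C1 f -> 0 < al -> piecewise_continuous (fun s => f (al * s)).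
Proof.
  intros [S [LF HS]] Hal a b. destruct (LF (al * a) (al * b)) as [L HL].
  exists (map (fun y => y / al) L). intros p q Hp Hpq Hq Hy.
  destruct (HS (al * p) (al * q)) as [g [[Hg1 _] Hg2]].
  - apply Rmult_lt_compat_l; auto.
  - intros x Hx Sx. apply (Hy (x / al)). apply (in_map (fun y => y / al)). apply HL; auto.
    split. apply Rle_trans with (al * p). apply Rmult_le_compat_l; lra. lra.
    apply Rle_trans with (al * q). lra. apply Rmult_le_compat_l; lra.
    split; apply Rmult_lt_reg_l with al; auto;
      replace (al * (x / al)) with x by (field; lra); lra.
  - exists (fun s => g (al * s)). split.
    + intros x. apply continuous_comp with (f := fun s => al * s).
      apply continuous_of_ex_derive. intros; auto_derive; auto.
      apply (ex_derive_continuous (K:=R_AbsRing) (V:=R_NormedModule)). apply Hg1.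
    + intros x Hx. apply Hg2. split; apply Rmult_lt_compat_l; lra.
Qed.

Lemma piecewise_continuous_of_C1 f : piecewise_C1 f -> piecewise_continuous f.
Proof.
  intros H. apply piecewise_continuous_ext with (fun s => f (1 * s)).
  apply piecewise_continuous_of_C1_scaled; auto; lra. intros; rewrite Rmult_1_l; auto.
Qed.

(** * Integral equations and derivatives *)

Lemma gap_around l : forall a b t, a < t < b -> ~ In t l ->
  exists p q, a <= p < t /\ t < q <= b /\ forall y, In y l -> ~ (p < y < q).
Proof.
  induction l as [|x l IH]; intros a b t Ht Hn.
  - exists a, b. split. lra. split. lra. intros y [].
  - destruct (IH a b t) as [p [q [Hp [Hq Hy]]]]; auto. intros Hi; apply Hn; right; auto.
    assert (x <> t) by (intros E; apply Hn; left; auto).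
    destruct (Rlt_dec x t).
    + exists (Rmax p x), q. split. unfold Rmax; destruct Rle_dec; lra. split. lra.
      intros y [<-|Hy']. unfold Rmax; destruct Rle_dec; lra.
      intros Hc. apply (Hy y Hy'). unfold Rmax in Hc; destruct Rle_dec in Hc; lra.
    + exists p, (Rmin q x). split. lra. split. unfold Rmin; destruct Rle_dec; lra.
      intros y [<-|Hy']. unfold Rmin; destruct Rle_dec; lra.
      intros Hc. apply (Hy y Hy'). unfold Rmin in Hc; destruct Rle_dec in Hc; lra.
Qed.

Lemma is_RInt_diff (g v : R -> R) (a s t : R) :
  is_RInt g a s (v s - v a) -> is_RInt g a t (v t - v a) -> is_RInt g s t (v t - v s).
Proof.
  intros Hs Ht. replace (v t - v s) with (plus (opp (v s - v a)) (v t - v a)).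
  2: { unfold plus, opp; simpl; ring. }
  apply (is_RInt_Chasles g s a t). apply (is_RInt_swap g s a). all: auto.
Qed.

Lemma is_derive_of_is_RInt_pc (l : list R) (a b : R) (g v : R -> R) (t : R) :
  (forall s, a <= s <= b -> is_RInt g a s (v s - v a)) -> pc_on l a b g ->
  a < t < b -> ~ In t l -> is_derive v t (g t).
Proof.
  intros Hv Hg Ht Hn.
  destruct (gap_around l a b t Ht Hn) as [p [q [Hp [Hq Hy]]]].
  destruct (Hg p q) as [G [HG EG]]; try lra; auto.
  assert (L : locally t (fun s => is_RInt G t s (v s - v t))).
  { apply (filter_imp (fun s => p < s < q)). 2: apply locally_open_interval; lra.
    intros s Hs. apply is_RInt_ext with g.
    { intros x Hx. apply EG. unfold Rmin, Rmax in Hx; repeat destruct Rle_dec in Hx; lra. }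
    apply is_RInt_diff with a; apply Hv; lra. }
  pose proof (is_derive_RInt G (fun s => v s - v t) t t L (HG t)) as D.
  rewrite EG by lra.
  apply is_derive_ext with (fun s => plus (v s - v t) (v t)).
  { intros s. unfold plus; simpl; ring. }
  replace (G t) with (plus (G t) zero) by (unfold plus, zero; simpl; ring).
  apply (is_derive_plus (fun s => v s - v t) (fun _ => v t) t (G t) zero).
  exact D. apply is_derive_const.
Qed.

Lemma is_RInt_derive_seg (a b : R) (F H : R -> R) : a < b -> seg_continuous a b F ->
  (forall x, continuous H x) -> (forall t, a < t < b -> is_derive F t (H t)) ->
  is_RInt H a b (F b - F a).
Proof.
  intros Hab HF HH HD.
  assert (Ex : forall u v, ex_RInt H u v).
  { intros u v. apply (ex_RInt_continuous (V:=R_CompleteNormedModule)). intros; apply HH. }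
  set (K := fun s => minus (F (clamp a b s)) (RInt H a s)).
  assert (DK : forall s, is_derive (RInt H a) s (H s)).
  { intros s. apply (is_derive_RInt H (RInt H a) a s). apply filter_forall.
    intros; apply (RInt_correct (V:=R_CompleteNormedModule)); auto. apply HH. }
  destruct (MVT_gen K a b (fun _ => 0)) as [c [_ Hc]].
  - rewrite Rmin_left, Rmax_right by lra. intros x Hx.
    replace 0 with (minus (H x) (H x)) by (unfold minus, plus, opp; simpl; ring).
    apply (is_derive_minus (fun s => F (clamp a b s)) (RInt H a) x (H x) (H x)). 2: apply DK.
    apply is_derive_ext_loc with F. 2: apply HD; auto.
    apply (filter_imp (fun s => a < s < b)). 2: apply locally_open_interval; auto.
    intros s Hs. rewrite clamp_id; auto; lra.
  - intros x Hx. apply continuity_pt_filterlim.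
    apply (continuous_minus (fun s => F (clamp a b s)) (RInt H a)). apply HF.
    apply ex_derive_continuous. eexists. apply DK.
  - unfold K in Hc. rewrite !clamp_id in Hc by lra. rewrite RInt_point in Hc.
    unfold minus, plus, opp, zero in Hc; simpl in Hc.
    replace (F b - F a) with (RInt H a b) by lra. apply (RInt_correct (V:=R_CompleteNormedModule)); auto.
Qed.

Lemma is_RInt_derive_pc (l : list R) : forall (a b : R) (F h : R -> R),
  a <= b -> seg_continuous a b F -> pc_on l a b h ->
  (forall t, a < t < b -> ~ In t l -> is_derive F t (h t)) -> is_RInt h a b (F b - F a).
Proof.
  induction l as [|x l IH]; intros a b F h Hab HF Hh HD.
  - destruct (Req_dec a b) as [E|E].
    + subst. replace (F b - F b) with (@zero R_NormedModule) by (unfold zero; simpl; ring).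
      apply is_RInt_point.
    + destruct (Hh a b) as [g [Hg Eg]]; try lra. intros y [].
      apply is_RInt_ext with g.
      { intros z Hz. rewrite Rmin_left, Rmax_right in Hz by lra. symmetry; apply Eg; auto. }
      apply is_RInt_derive_seg; auto. lra. intros t Ht. rewrite <- Eg by auto. apply HD; auto.
  - pose proof (pc_on_split x l a b h Hh) as Hs.
    assert (HD' : forall a' b', a <= a' -> b' <= b -> (x <= a' \/ b' <= x) ->
        forall t, a' < t < b' -> ~ In t l -> is_derive F t (h t)).
    { intros a' b' H1 H2 H3 t Ht Hn. apply HD. lra. intros [E|E]; [lra|auto]. }
    destruct (Rlt_dec a x); [destruct (Rlt_dec x b)|].
    + replace (F b - F a) with (plus (F x - F a) (F b - F x)) by (unfold plus; simpl; ring).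
      apply (is_RInt_Chasles h a x b).
      * apply IH; [lra | apply seg_continuous_sub with a b; auto; lra | apply Hs; lra |].
        apply HD'; lra.
      * apply IH; [lra | apply seg_continuous_sub with a b; auto; lra | apply Hs; lra |].
        apply HD'; lra.
    + apply IH; auto. apply Hs; lra. apply HD'; lra.
    + apply IH; auto. apply Hs; lra. apply HD'; lra.
Qed.

Lemma is_RInt_const0 a b : is_RInt (fun _ : R => 0) a b 0.
Proof.
  pose proof (is_RInt_const (V:=R_NormedModule) a b 0) as C.
  change (is_RInt (fun _ : R => 0) a b ((b - a) * 0)) in C. rewrite Rmult_0_r in C. exact C.
Qed.

Lemma nonincreasing_of_derive_nonpos (l : list R) (a b : R) (F h : R -> R) :
  a <= b -> seg_continuous a b F -> pc_on l a b h ->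
  (forall t, a < t < b -> ~ In t l -> is_derive F t (h t) /\ h t <= 0) -> F b <= F a.
Proof.
  intros Hab HF Hh HD.
  assert (I : is_RInt (fun s => Rmin (h s) 0) a b (F b - F a)).
  { apply is_RInt_derive_pc with l; auto.
    - apply pc_on_comp with (phi := fun u => Rmin u 0); auto.
      intros x. apply lipschitz_continuous with 1. intros s t.
      unfold Rmin; repeat destruct Rle_dec; unfold Rabs; repeat destruct Rcase_abs; lra.
    - intros t Ht Hn. destruct (HD t Ht Hn) as [D1 D2]. rewrite Rmin_left by lra. auto. }
  assert (F b - F a <= 0); [|lra].
  apply (is_RInt_le _ _ a b _ _ Hab I (is_RInt_const0 a b)). intros. apply Rmin_r.
Qed.

Lemma seg_continuous_of_is_RInt (a b : R) (g v : R -> R) :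
  a <= b -> (forall s, a <= s <= b -> is_RInt g a s (v s - v a)) -> seg_continuous a b v.
Proof.
  intros Hab Hv t.
  destruct (ex_RInt_ub g a b (ex_intro _ _ (Hv b ltac:(lra)))) as [M HM].
  rewrite Rmin_left, Rmax_right in HM by lra.
  apply lipschitz_continuous with M. intros s1 s2.
  pose proof (clamp_range a b s1 Hab). pose proof (clamp_range a b s2 Hab).
  set (c1 := clamp a b s1) in *. set (c2 := clamp a b s2) in *.
  assert (I : is_RInt g c2 c1 (v c1 - v c2)) by (apply is_RInt_diff with a; apply Hv; lra).
  assert (N : Rabs (v c1 - v c2) <= Rabs (c1 - c2) * M).
  { apply (norm_RInt_le_const_abs g c2 c1); auto.
    intros x Hx. apply HM. unfold Rmin, Rmax in Hx; repeat destruct Rle_dec in Hx; lra. }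
  assert (0 <= M) by (apply Rle_trans with (Rabs (g a)); [apply Rabs_pos | apply HM; lra]).
  pose proof (clamp_lipschitz a b s1 s2 Hab). fold c1 c2 in H2. nra.
Qed.

(** * Gronwall's inequality *)

Lemma seg_continuous_exp_lin a b k : a <= b -> seg_continuous a b (fun s => exp (k * s)).
Proof.
  intros. apply seg_continuous_of_continuous; auto. intros t.
  apply continuous_of_ex_derive. intros; auto_derive; auto.
Qed.

(* Gronwall: the weighted energy [(D1^2 + D2^2) exp (- 2 lam s)] is nonincreasing. *)
Lemma energy_gronwall (l : list R) (T lam : R) (D1 D2 h1 h2 : R -> R) :
  0 <= T -> seg_continuous 0 T D1 -> seg_continuous 0 T D2 -> pc_on l 0 T h1 -> pc_on l 0 T h2 ->
  (forall s, 0 <= s <= T -> is_RInt h1 0 s (D1 s - D1 0)) ->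
  (forall s, 0 <= s <= T -> is_RInt h2 0 s (D2 s - D2 0)) ->
  (forall s, 0 <= s <= T -> D1 s * h1 s + D2 s * h2 s <= lam * (D1 s ^ 2 + D2 s ^ 2)) ->
  D1 T ^ 2 + D2 T ^ 2 <= (D1 0 ^ 2 + D2 0 ^ 2) * exp (2 * lam * T).
Proof.
  intros HT C1 C2 P1 P2 I1 I2 Hl.
  set (k := fun s => exp (- (2 * lam) * s)).
  set (E := fun s => (D1 s ^ 2 + D2 s ^ 2) * k s).
  set (h := fun s => (2 * (D1 s * h1 s + D2 s * h2 s) - 2 * lam * (D1 s ^ 2 + D2 s ^ 2)) * k s).
  assert (Ck : seg_continuous 0 T k) by (apply seg_continuous_exp_lin; auto).
  assert (CE : seg_continuous 0 T (fun s => D1 s ^ 2 + D2 s ^ 2)).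
  { apply seg_continuous_ext with (fun s => D1 s * (D1 s * 1) + D2 s * (D2 s * 1)). 2: intros; ring.
    apply seg_continuous_plus; apply seg_continuous_mult; auto;
      apply seg_continuous_mult; auto; apply seg_continuous_const. }
  assert (M : E T <= E 0).
  { apply nonincreasing_of_derive_nonpos with l h; auto.
    - apply seg_continuous_mult; auto.
    - apply pc_on_ext with (fun s => (2 * D1 s * k s) * h1 s +
         ((2 * D2 s * k s) * h2 s + (- 2 * lam * (D1 s ^ 2 + D2 s ^ 2) * k s))).
      2: { intros x; unfold h; ring. }
      apply pc_on_plus. apply pc_on_mult_seg; auto.
      apply seg_continuous_mult; auto. apply seg_continuous_scal; auto.
      apply pc_on_plus. apply pc_on_mult_seg; auto.
      apply seg_continuous_mult; auto. apply seg_continuous_scal; auto.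
      apply pc_on_of_seg_continuous. apply seg_continuous_mult; auto. apply seg_continuous_scal; auto.
    - intros t Ht Hn. split.
      + unfold E, h, k. pose proof (is_derive_of_is_RInt_pc l 0 T h1 D1 t I1 P1 Ht Hn) as d1.
        pose proof (is_derive_of_is_RInt_pc l 0 T h2 D2 t I2 P2 Ht Hn) as d2.
        auto_derive. solve_ex_derive. rewrite_Derive d1. rewrite_Derive d2. ring.
      + unfold h. pose proof (Hl t ltac:(lra)). pose proof (exp_pos (- (2 * lam) * t)).
        unfold k. nra. }
  unfold E, k in M. rewrite Rmult_0_r, exp_0, Rmult_1_r in M.
  pose proof (exp_pos (2 * lam * T)).
  replace (D1 T ^ 2 + D2 T ^ 2) with
    ((D1 T ^ 2 + D2 T ^ 2) * exp (- (2 * lam) * T) * exp (2 * lam * T)).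
  - apply Rmult_le_compat_r; lra.
  - rewrite Rmult_assoc, <- exp_plus. replace (- (2 * lam) * T + 2 * lam * T) with 0 by ring.
    rewrite exp_0. ring.
Qed.

Definition ode_sol (a phi : R -> R) (z : R -> R) : Prop :=
  forall t, 0 <= t -> is_RInt (fun s => a s + phi (z s)) 0 t (z t - z 0).

Lemma ode_sol_ext (a a' phi phi' z : R -> R) :
  (forall s, a s + phi (z s) = a' s + phi' (z s)) -> ode_sol a phi z -> ode_sol a' phi' z.
Proof. intros E H t Ht. apply is_RInt_ext with (2 := H t Ht). intros; apply E. Qed.

Lemma ode_sol_sq_diff_le (a phi z w : R -> R) (lam T : R) :
  (forall x, continuous phi x) ->
  (forall x y, (x - y) * (phi x - phi y) <= lam * (x - y) ^ 2) ->
  0 <= T -> seg_continuous 0 T z -> seg_continuous 0 T w ->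
  ode_sol a phi z -> ode_sol a phi w ->
  (z T - w T) ^ 2 <= (z 0 - w 0) ^ 2 * exp (2 * lam * T).
Proof.
  intros Hphi Hl HT Cz Cw Iz Iw.
  pose proof (energy_gronwall nil T lam (fun s => z s - w s) (fun _ => 0)
    (fun s => phi (z s) - phi (w s)) (fun _ => 0)) as G.
  replace ((z T - w T) ^ 2) with ((z T - w T) ^ 2 + 0 ^ 2) by ring.
  replace ((z 0 - w 0) ^ 2) with ((z 0 - w 0) ^ 2 + 0 ^ 2) by ring.
  apply G; auto.
  - apply seg_continuous_minus; auto.
  - apply seg_continuous_const.
  - apply pc_on_of_seg_continuous.
    apply seg_continuous_minus; apply seg_continuous_comp; auto.
  - apply pc_on_of_seg_continuous. apply seg_continuous_const.
  - intros s Hs. pose proof (is_RInt_minus _ _ 0 s _ _ (Iz s ltac:(lra)) (Iw s ltac:(lra))) as M.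
    replace (z s - w s - (z 0 - w 0)) with (minus (z s - z 0) (w s - w 0))
      by (unfold minus, plus, opp; simpl; ring).
    apply is_RInt_ext with (2 := M). intros x _. unfold minus, plus, opp; simpl. ring.
  - intros s Hs. replace (0 - 0) with 0 by ring. apply is_RInt_const0.
  - intros s Hs. pose proof (Hl (z s) (w s)). simpl in *. lra.
Qed.

(** * Hyperbolic functions *)

Lemma is_derive_sinh x : is_derive sinh x (cosh x).
Proof. apply is_derive_Reals. apply derivable_pt_lim_sinh. Qed.

Lemma is_derive_cosh x : is_derive cosh x (sinh x).
Proof. apply is_derive_Reals. apply derivable_pt_lim_cosh. Qed.

Lemma continuous_sinh x : continuous sinh x.
Proof. apply continuous_of_ex_derive. intros; eexists; apply is_derive_sinh. Qed.

Lemma continuous_cosh x : continuous cosh x.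
Proof. apply continuous_of_ex_derive. intros; eexists; apply is_derive_cosh. Qed.

Lemma cosh_ge_1 x : 1 <= cosh x.
Proof. unfold cosh. pose proof (exp_ineq1_le x). pose proof (exp_ineq1_le (- x)). lra. Qed.

Lemma cosh_sq x : cosh x ^ 2 = 1 + sinh x ^ 2.
Proof.
  unfold cosh, sinh. assert (exp x * exp (- x) = 1).
  { rewrite <- exp_plus. replace (x + - x) with 0 by ring. apply exp_0. }
  nra.
Qed.

Lemma cosh_minus_sinh x : cosh x - sinh x = exp (- x).
Proof. unfold cosh, sinh. field. Qed.

Lemma cosh_plus_sinh x : cosh x + sinh x = exp x.
Proof. unfold cosh, sinh. field. Qed.

Lemma sinh_opp x : sinh (- x) = - sinh x.
Proof. unfold sinh. rewrite Ropp_involutive. field. Qed.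

Lemma exp_le x y : x <= y -> exp x <= exp y.
Proof. intros [H|H]. left; apply exp_increasing; auto. subst; lra. Qed.

Lemma cosh_le_exp A c : Rabs c <= A -> cosh c <= exp A.
Proof.
  intros H. unfold cosh. pose proof (exp_le c A). pose proof (exp_le (- c) A).
  unfold Rabs in H; destruct Rcase_abs in H; lra.
Qed.

Lemma Rabs_sinh_le_exp A c : Rabs c <= A -> Rabs (sinh c) <= exp A.
Proof.
  intros H. unfold sinh. pose proof (exp_le c A). pose proof (exp_le (- c) A).
  pose proof (exp_pos c). pose proof (exp_pos (- c)).
  assert (c <= A /\ - c <= A) by (unfold Rabs in H; destruct Rcase_abs in H; lra).
  unfold Rabs; destruct Rcase_abs; lra.
Qed.

Lemma mean_value (f df : R -> R) u v : (forall x, is_derive f x (df x)) ->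
  exists c, Rmin u v <= c <= Rmax u v /\ f u - f v = df c * (u - v).
Proof.
  intros H. destruct (MVT_gen f v u df) as [c [Hc E]].
  - intros; apply H.
  - intros; apply continuity_pt_filterlim. apply continuous_of_ex_derive. intros; eexists; apply H.
  - exists c. split; auto. rewrite Rmin_comm, Rmax_comm; auto.
Qed.

Lemma sinh_sq_monotone a b : (a - b) ^ 2 <= (sinh a - sinh b) * (a - b).
Proof.
  destruct (mean_value sinh cosh a b is_derive_sinh) as [c [_ E]]. rewrite E.
  pose proof (cosh_ge_1 c). pose proof (pow2_ge_0 (a - b)). nra.
Qed.

Lemma sinh_ge_id x : 0 <= x -> x <= sinh x.
Proof.
  intros [H|H]. 2: { subst. rewrite sinh_0. lra. }
  pose proof (sinh_sq_monotone x 0). rewrite sinh_0 in H0. nra.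
Qed.

Lemma Rabs_between c u v A :
  Rmin u v <= c <= Rmax u v -> Rabs u <= A -> Rabs v <= A -> Rabs c <= A.
Proof. unfold Rmin, Rmax, Rabs; repeat destruct Rle_dec; repeat destruct Rcase_abs; lra. Qed.

Lemma sinh_lipschitz A u v :
  Rabs u <= A -> Rabs v <= A -> Rabs (sinh u - sinh v) <= exp A * Rabs (u - v).
Proof.
  intros Hu Hv. destruct (mean_value sinh cosh u v is_derive_sinh) as [c [Hc E]].
  rewrite E, Rabs_mult. apply Rmult_le_compat_r. apply Rabs_pos.
  rewrite Rabs_pos_eq. apply cosh_le_exp. eapply Rabs_between; eauto.
  pose proof (cosh_ge_1 c); lra.
Qed.

Lemma cosh_lipschitz A u v :
  Rabs u <= A -> Rabs v <= A -> Rabs (cosh u - cosh v) <= exp A * Rabs (u - v).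
Proof.
  intros Hu Hv. destruct (mean_value cosh sinh u v is_derive_cosh) as [c [Hc E]].
  rewrite E, Rabs_mult. apply Rmult_le_compat_r. apply Rabs_pos.
  apply Rabs_sinh_le_exp. eapply Rabs_between; eauto.
Qed.

(** * Invariant bands *)

Definition pos_sq (x : R) := Rmax x 0 ^ 2.

Lemma is_derive_pos_sq x : is_derive pos_sq x (2 * Rmax x 0).
Proof.
  destruct (Rlt_dec 0 x) as [H|H]; [|destruct (Rlt_dec x 0) as [H'|H']].
  - apply is_derive_ext_loc with (fun y => y ^ 2).
    apply (filter_imp (fun y => 0 < y < x + 1)). 2: apply locally_open_interval; lra.
    intros y Hy. unfold pos_sq. rewrite Rmax_left; lra.
    rewrite Rmax_left by lra. auto_derive; auto. ring.
  - apply is_derive_ext_loc with (fun y => 0).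
    apply (filter_imp (fun y => x - 1 < y < 0)). 2: apply locally_open_interval; lra.
    intros y Hy. unfold pos_sq. rewrite Rmax_right; lra.
    rewrite Rmax_right by lra. replace (2 * 0) with (@zero R_NormedModule) by (unfold zero; simpl; ring).
    apply is_derive_const.
  - assert (x = 0) by lra. subst. rewrite Rmax_right by lra.
    apply is_derive_Reals. intros eps Heps. exists (mkposreal eps Heps). simpl. intros h Hh Hl.
    unfold pos_sq. rewrite Rplus_0_l, (Rmax_right 0 0) by lra.
    unfold Rmax; destruct Rle_dec.
    + replace ((0 ^ 2 - 0 ^ 2) / h - 2 * 0) with 0 by (field; auto). rewrite Rabs_R0; auto.
    + replace ((h ^ 2 - 0 ^ 2) / h - 2 * 0) with h by (field; auto). auto.
Qed.

Lemma continuous_Rmax0 x : continuous (fun u => Rmax u 0) x.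
Proof.
  apply lipschitz_continuous with 1. intros.
  unfold Rmax; repeat destruct Rle_dec; unfold Rabs; repeat destruct Rcase_abs; lra.
Qed.

(* [pos_sq (z - A)] vanishes exactly while [z <= A] and cannot increase. *)
Lemma ode_sol_le_barrier (a phi z : R -> R) (A : R) :
  piecewise_continuous a -> (forall x, continuous phi x) -> (forall t, continuous z t) ->
  (forall s x, A <= x -> a s + phi x <= 0) -> ode_sol a phi z -> z 0 <= A ->
  forall t, 0 <= t -> z t <= A.
Proof.
  intros Ha Hphi Hz Hpush Hsol Hz0 t Ht.
  destruct (Ha 0 t) as [l Hl].
  set (g := fun s => a s + phi (z s)).
  assert (Pg : pc_on l 0 t g).
  { apply pc_on_plus; auto. apply pc_on_of_seg_continuous.
    apply seg_continuous_of_continuous; auto. intros; apply continuous_comp; auto. }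
  assert (M : pos_sq (z t - A) <= pos_sq (z 0 - A)).
  { apply (nonincreasing_of_derive_nonpos l 0 t (fun s => pos_sq (z s - A))
      (fun s => 2 * Rmax (z s - A) 0 * g s)); auto.
    - apply seg_continuous_of_continuous; auto. intros. apply continuous_comp with (g := pos_sq).
      + apply (continuous_minus z (fun _ => A)); auto. apply continuous_const.
      + apply continuous_of_ex_derive. intros; eexists; apply is_derive_pos_sq.
    - apply pc_on_mult_seg; auto. apply seg_continuous_of_continuous; auto. intros.
      apply (continuous_mult (fun _ => 2) (fun s => Rmax (z s - A) 0)). apply continuous_const.
      apply continuous_comp with (g := fun u => Rmax u 0). 2: apply continuous_Rmax0.
      apply (continuous_minus z (fun _ => A)); auto. apply continuous_const.
    - intros s Hs Hn. split.
      + assert (d : is_derive (fun s => z s - A) s (g s)).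
        { pose proof (is_derive_of_is_RInt_pc l 0 t g z s ltac:(intros; apply Hsol; lra) Pg Hs Hn) as d.
          auto_derive. solve_ex_derive. rewrite_Derive d. ring. }
        pose proof (is_derive_comp pos_sq (fun s => z s - A) s _ _ (is_derive_pos_sq (z s - A)) d) as dd.
        replace (2 * Rmax (z s - A) 0 * g s) with (scal (g s) (2 * Rmax (z s - A) 0)).
        exact dd. unfold scal; simpl; unfold mult; simpl; ring.
      + destruct (Rle_dec (z s) A).
        * rewrite Rmax_right by lra. lra.
        * rewrite Rmax_left by lra. pose proof (Hpush s (z s) ltac:(lra)). unfold g. nra. }
  unfold pos_sq in M. rewrite (Rmax_right (z 0 - A)) in M by lra.
  unfold Rmax in M; destruct Rle_dec in M; nra.
Qed.

Lemma ode_sol_opp (a phi z : R -> R) :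
  ode_sol a phi z -> ode_sol (fun s => - a s) (fun x => - phi (- x)) (fun s => - z s).
Proof.
  intros H t Ht. replace (- z t - - z 0) with (opp (z t - z 0)) by (unfold opp; simpl; ring).
  apply is_RInt_ext with (fun s => opp (a s + phi (z s))).
  { intros; unfold opp; simpl. rewrite Ropp_involutive. ring. }
  apply (is_RInt_opp (V:=R_NormedModule)). auto.
Qed.

Lemma ode_sol_ge_barrier (a phi z : R -> R) (B : R) :
  piecewise_continuous a -> (forall x, continuous phi x) -> (forall t, continuous z t) ->
  (forall s x, x <= B -> 0 <= a s + phi x) -> ode_sol a phi z -> B <= z 0 ->
  forall t, 0 <= t -> B <= z t.
Proof.
  intros Ha Hphi Hz Hpush Hsol Hz0 t Ht.
  enough (- z t <= - B) by lra.
  apply (ode_sol_le_barrier (fun s => - a s) (fun x => - phi (- x)) (fun s => - z s)); auto; try lra.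
  - apply piecewise_continuous_ext with (fun s => -1 * a s). 2: intros; ring.
    apply piecewise_continuous_scal; auto.
  - intros x. apply (continuous_opp (fun x => phi (- x))). apply continuous_comp; auto.
    apply continuous_of_ex_derive; intros; auto_derive; auto.
  - intros x. apply (continuous_opp z); auto.
  - intros s x Hx. pose proof (Hpush s (- x) ltac:(lra)). lra.
  - apply ode_sol_opp; auto.
Qed.

Lemma ode_sol_Rabs_le (a phi z : R -> R) (A : R) :
  piecewise_continuous a -> (forall x, continuous phi x) -> (forall t, continuous z t) ->
  (forall s x, A <= x -> a s + phi x <= 0) -> (forall s x, x <= - A -> 0 <= a s + phi x) ->
  ode_sol a phi z -> Rabs (z 0) <= A -> forall t, 0 <= t -> Rabs (z t) <= A.
Proof.
  intros Ha Hphi Hz Hup Hlo Hsol Hz0 t Ht. apply Rabs_le.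
  apply Rabs_le_between in Hz0. split.
  - apply (ode_sol_ge_barrier a phi z); auto; lra.
  - apply (ode_sol_le_barrier a phi z); auto; lra.
Qed.

(* The nonlinearity [x |-> - b sinh x] of the z-equation, frozen outside [[-A, A]] so
   that it becomes bounded and globally Lipschitz. *)
Definition drift (b A x : R) := - b * sinh (clamp (- A) A x).

Lemma Rabs_clamp A x : 0 <= A -> Rabs (clamp (- A) A x) <= A.
Proof. intros. pose proof (clamp_range (- A) A x ltac:(lra)). apply Rabs_le; lra. Qed.

Lemma drift_bound b A x : 0 < b -> 0 <= A -> Rabs (drift b A x) <= b * exp A.
Proof.
  intros. unfold drift. rewrite Rabs_mult, Rabs_Ropp, Rabs_pos_eq by lra.
  apply Rmult_le_compat_l. lra. apply Rabs_sinh_le_exp. apply Rabs_clamp; auto.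
Qed.

Lemma drift_lipschitz b A x y : 0 < b -> 0 <= A ->
  Rabs (drift b A x - drift b A y) <= b * exp A * Rabs (x - y).
Proof.
  intros. unfold drift.
  replace (- b * sinh (clamp (- A) A x) - - b * sinh (clamp (- A) A y)) with
    (- b * (sinh (clamp (- A) A x) - sinh (clamp (- A) A y))) by ring.
  rewrite Rabs_mult, Rabs_Ropp, (Rabs_pos_eq b) by lra. rewrite Rmult_assoc.
  apply Rmult_le_compat_l. lra.
  eapply Rle_trans. apply sinh_lipschitz; apply Rabs_clamp; auto.
  apply Rmult_le_compat_l. pose proof (exp_pos A); lra.
  pose proof (clamp_lipschitz (- A) A x y ltac:(lra)). lra.
Qed.

Lemma continuous_drift b A x : 0 < b -> 0 <= A -> continuous (drift b A) x.
Proof. intros. apply lipschitz_continuous with (b * exp A). intros; apply drift_lipschitz; auto. Qed.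

Lemma drift_id b A x : Rabs x <= A -> drift b A x = - b * sinh x.
Proof. intros. unfold drift. rewrite clamp_id; auto. apply Rabs_le_between; auto. Qed.

Lemma ode_sol_drift_bounded (a z : R -> R) (b A Ca : R) :
  0 < b -> 0 <= A -> (forall t, Rabs (a t) <= Ca) -> Ca <= b * sinh A ->
  piecewise_continuous a -> (forall t, continuous z t) -> ode_sol a (drift b A) z ->
  Rabs (z 0) <= A -> forall t, 0 <= t -> Rabs (z t) <= A.
Proof.
  intros Hb HA Ha HC Hp Hz Hsol Hz0.
  assert (clamp_hi : forall x, A <= x -> clamp (- A) A x = A).
  { intros. unfold clamp, Rmax, Rmin. repeat destruct Rle_dec; lra. }
  assert (clamp_lo : forall x, x <= - A -> clamp (- A) A x = - A).
  { intros. unfold clamp, Rmax, Rmin. repeat destruct Rle_dec; lra. }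
  apply (ode_sol_Rabs_le a (drift b A) z); auto.
  - intros; apply continuous_drift; auto.
  - intros s x Hx. unfold drift. rewrite clamp_hi by auto.
    pose proof (Ha s). pose proof (Rle_abs (a s)). lra.
  - intros s x Hx. unfold drift. rewrite clamp_lo, sinh_opp by auto.
    pose proof (Ha s). apply Rabs_le_between in H. lra.
Qed.

(** * Picard iteration *)

Lemma is_lim_seq_Rabs_minus_le (u v : nat -> R) (l1 l2 M : R) :
  is_lim_seq u l1 -> is_lim_seq v l2 -> (forall n, Rabs (u n - v n) <= M) -> Rabs (l1 - l2) <= M.
Proof.
  intros H1 H2 H. pose proof (is_lim_seq_minus' u v l1 l2 H1 H2) as H3.
  apply is_lim_seq_abs in H3.
  exact (is_lim_seq_le _ _ _ _ H H3 (is_lim_seq_const M)).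
Qed.

Lemma geometric_half_small C eps : 0 < eps -> exists N, C * (/ 2) ^ N < eps.
Proof.
  intros He.
  destruct (pow_lt_1_zero (/ 2) ltac:(rewrite Rabs_pos_eq; lra) (eps / (Rabs C + 1))) as [N HN].
  { apply Rdiv_lt_0_compat; auto. pose proof (Rabs_pos C); lra. }
  exists N. specialize (HN N (le_n N)). pose proof (pow_le (/ 2) N ltac:(lra)).
  rewrite Rabs_pos_eq in HN by auto. pose proof (Rabs_pos C). pose proof (Rle_abs C).
  apply Rle_lt_trans with (Rabs C * (/ 2) ^ N). nra.
  apply Rle_lt_trans with (Rabs C * (eps / (Rabs C + 1))). nra.
  apply Rmult_lt_reg_r with (Rabs C + 1). lra. field_simplify; nra.
Qed.

Lemma eq0_of_le_geometric X C : 0 <= X -> (forall n, X <= C * (/ 2) ^ n) -> X = 0.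
Proof.
  intros [H0|H0] H; auto.
  destruct (geometric_half_small C X H0) as [N HN]. specialize (H N). lra.
Qed.

Lemma RInt_lipschitz (g : R -> R) B : (forall u v, ex_RInt g u v) -> (forall x, Rabs (g x) <= B) ->
  forall s t, Rabs (RInt g 0 t - RInt g 0 s) <= B * Rabs (t - s).
Proof.
  intros He Hb s t.
  replace (RInt g 0 t - RInt g 0 s) with (RInt g s t).
  2: { pose proof (RInt_Chasles (V:=R_CompleteNormedModule) g 0 s t (He _ _) (He _ _)) as E.
       change (RInt g 0 s + RInt g s t = RInt g 0 t) in E. lra. }
  rewrite Rmult_comm. apply (norm_RInt_le_const_abs g s t (RInt g s t) B).
  intros; apply Hb. apply (RInt_correct (V:=R_CompleteNormedModule)); auto.
Qed.

Lemma is_RInt_exp_lin k c t : k <> 0 ->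
  is_RInt (fun u => c * exp (k * u)) 0 t (c * (exp (k * t) - 1) / k).
Proof.
  intros Hk.
  replace (c * (exp (k * t) - 1) / k) with (minus (c * exp (k * t) / k) (c * exp (k * 0) / k)).
  2: { rewrite Rmult_0_r, exp_0. unfold minus, plus, opp; simpl. field. lra. }
  apply (is_RInt_derive (fun u => c * exp (k * u) / k)).
  - intros x _. auto_derive; auto. field. lra.
  - intros x _. apply continuous_of_ex_derive. intros; auto_derive; auto.
Qed.

Section Picard.

Variables (a phi : R -> R) (Ca B0 L : R).
Hypothesis a_pc : piecewise_continuous a.
Hypothesis a_bound : forall t, Rabs (a t) <= Ca.
Hypothesis phi_bound : forall x, Rabs (phi x) <= B0.
Hypothesis phi_lipschitz : forall x y, Rabs (phi x - phi y) <= L * Rabs (x - y).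
Hypothesis L_pos : 0 < L.

Fixpoint picard_iter (z0 : R) (n : nat) : R -> R :=
  match n with
  | O => fun _ => z0
  | S n => fun t => z0 + RInt (fun u => a u + phi (picard_iter z0 n u)) 0 t
  end.

(* Frozen at [z0] for negative times, where the equation is not imposed. *)
Definition picard_sol (z0 t : R) : R := real (Lim_seq (fun n => picard_iter z0 n (Rmax 0 t))).

Let B := Ca + B0.
Let K := B / (2 * L).

Lemma phi_continuous x : continuous phi x.
Proof. apply lipschitz_continuous with L; auto. Qed.

Lemma B_nonneg : 0 <= B.
Proof.
  pose proof (Rle_trans _ _ _ (Rabs_pos _) (a_bound 0)).
  pose proof (Rle_trans _ _ _ (Rabs_pos _) (phi_bound 0)). unfold B. lra.
Qed.

Lemma K_nonneg : 0 <= K.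
Proof.
  pose proof B_nonneg. unfold K. apply Rmult_le_pos; auto. left; apply Rinv_0_lt_compat; lra.
Qed.

Lemma integrand_bound (w : R -> R) x : Rabs (a x + phi (w x)) <= B.
Proof. eapply Rle_trans. apply Rabs_triang. pose proof (a_bound x). pose proof (phi_bound (w x)). unfold B. lra. Qed.

Lemma integrand_ex_RInt (w : R -> R) : (forall x, continuous w x) ->
  forall u v, ex_RInt (fun s => a s + phi (w s)) u v.
Proof.
  intros Hw. apply piecewise_continuous_ex_RInt. apply piecewise_continuous_plus_continuous; auto.
  intros; apply continuous_comp; auto. apply phi_continuous.
Qed.

Lemma picard_iter_lipschitz z0 n s t :
  Rabs (picard_iter z0 n t - picard_iter z0 n s) <= B * Rabs (t - s).
Proof.
  revert s t. induction n; intros s t; simpl.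
  - rewrite Rminus_eq_0, Rabs_R0. apply Rmult_le_pos. apply B_nonneg. apply Rabs_pos.
  - match goal with |- Rabs (?c + ?I - (?c + ?J)) <= _ => replace (c + I - (c + J)) with (I - J) by lra end.
    apply RInt_lipschitz. 2: intros; apply integrand_bound.
    apply integrand_ex_RInt. intros; apply lipschitz_continuous with B; auto.
Qed.

Lemma continuous_picard_iter z0 n x : continuous (picard_iter z0 n) x.
Proof. apply lipschitz_continuous with B. intros; apply picard_iter_lipschitz. Qed.

Lemma iter_ex_RInt z0 n u v : ex_RInt (fun s => a s + phi (picard_iter z0 n s)) u v.
Proof. apply integrand_ex_RInt. apply continuous_picard_iter. Qed.

Lemma is_RInt_RInt (g : R -> R) u v : ex_RInt g u v -> is_RInt g u v (RInt g u v).
Proof. intros; apply (RInt_correct (V:=R_CompleteNormedModule)); auto. Qed.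

(* The weight [exp (2 L t)] makes the Picard map a 1/2-contraction. *)
Lemma picard_iter_step z0 n t : 0 <= t ->
  Rabs (picard_iter z0 (S n) t - picard_iter z0 n t) <= K * (/ 2) ^ n * exp (2 * L * t).
Proof.
  revert t. induction n; intros t Ht.
  - simpl. replace (z0 + RInt (fun u => a u + phi z0) 0 t - z0) with (RInt (fun u => a u + phi z0) 0 t) by lra.
    eapply Rle_trans. apply (norm_RInt_le_const (fun u => a u + phi z0) 0 t _ B Ht).
    intros; apply (integrand_bound (fun _ => z0)). apply is_RInt_RInt. apply (iter_ex_RInt z0 O).
    pose proof (exp_ineq1_le (2 * L * t)). pose proof B_nonneg.
    replace (K * 1 * exp (2 * L * t)) with (B * (exp (2 * L * t) / (2 * L))) by (unfold K; field; lra).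
    rewrite Rminus_0_r, (Rmult_comm t B). apply Rmult_le_compat_l. auto.
    apply Rmult_le_reg_r with (2 * L). lra. field_simplify; lra.
  - set (g1 := fun u => a u + phi (picard_iter z0 (S n) u)).
    set (g0 := fun u => a u + phi (picard_iter z0 n u)).
    change (Rabs ((z0 + RInt g1 0 t) - (z0 + RInt g0 0 t)) <= K * (/ 2) ^ S n * exp (2 * L * t)).
    replace ((z0 + RInt g1 0 t) - (z0 + RInt g0 0 t)) with (minus (RInt g1 0 t) (RInt g0 0 t))
      by (unfold minus, plus, opp; simpl; ring).
    pose proof (is_RInt_minus g1 g0 0 t _ _ (is_RInt_RInt _ _ _ (iter_ex_RInt z0 (S n) 0 t))
      (is_RInt_RInt _ _ _ (iter_ex_RInt z0 n 0 t))) as Im.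
    pose proof (is_RInt_exp_lin (2 * L) (L * (K * (/ 2) ^ n)) t ltac:(lra)) as Ie.
    eapply Rle_trans. apply (norm_RInt_le _ _ 0 t _ _ Ht) with (2 := Im) (3 := Ie).
    + intros x Hx. change (Rabs (g1 x - g0 x) <= L * (K * (/ 2) ^ n) * exp (2 * L * x)).
      unfold g1, g0.
      replace (a x + phi (picard_iter z0 (S n) x) - (a x + phi (picard_iter z0 n x))) with
        (phi (picard_iter z0 (S n) x) - phi (picard_iter z0 n x)) by ring.
      eapply Rle_trans. apply phi_lipschitz. rewrite (Rmult_assoc L). apply Rmult_le_compat_l. lra.
      apply IHn. lra.
    + pose proof (exp_pos (2 * L * t)). pose proof K_nonneg. pose proof (pow_le (/ 2) n ltac:(lra)).
      simpl. apply Rle_trans with (L * (K * (/ 2) ^ n) * exp (2 * L * t) / (2 * L)).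
      * apply Rmult_le_compat_r. left; apply Rinv_0_lt_compat; lra.
        apply Rmult_le_compat_l. apply Rmult_le_pos; [lra | apply Rmult_le_pos; lra]. lra.
      * right. field. lra.
Qed.

Lemma picard_iter_cauchy z0 n m t : 0 <= t -> (n <= m)%nat ->
  Rabs (picard_iter z0 m t - picard_iter z0 n t) <= 2 * K * (/ 2) ^ n * exp (2 * L * t).
Proof.
  intros Ht Hnm.
  assert (Tel : forall k, Rabs (picard_iter z0 (n + k) t - picard_iter z0 n t) <=
      2 * K * (/ 2) ^ n * exp (2 * L * t) - 2 * K * (/ 2) ^ (n + k) * exp (2 * L * t)).
  { induction k.
    - rewrite Nat.add_0_r, Rminus_eq_0, Rabs_R0. lra.
    - replace (n + S k)%nat with (S (n + k)) by lia.
      eapply Rle_trans.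
      + replace (picard_iter z0 (S (n + k)) t - picard_iter z0 n t) with
          ((picard_iter z0 (S (n + k)) t - picard_iter z0 (n + k) t) +
           (picard_iter z0 (n + k) t - picard_iter z0 n t)) by ring.
        apply Rabs_triang.
      + pose proof (picard_iter_step z0 (n + k) t Ht).
        change ((/ 2) ^ S (n + k)) with (/ 2 * (/ 2) ^ (n + k)). lra. }
  replace m with (n + (m - n))%nat by lia. eapply Rle_trans. apply Tel.
  pose proof (pow_le (/ 2) (n + (m - n)) ltac:(lra)). pose proof (exp_pos (2 * L * t)).
  pose proof K_nonneg.
  assert (0 <= 2 * K * (/ 2) ^ (n + (m - n)) * exp (2 * L * t))
    by (apply Rmult_le_pos; [apply Rmult_le_pos|]; lra).
  lra.
Qed.

Lemma picard_iter_cvg z0 t : 0 <= t -> is_lim_seq (fun n => picard_iter z0 n t) (picard_sol z0 t).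
Proof.
  intros Ht. unfold picard_sol. rewrite Rmax_right by lra.
  assert (E : ex_finite_lim_seq (fun n => picard_iter z0 n t)).
  { apply ex_lim_seq_cauchy_corr. intros eps.
    destruct (geometric_half_small (4 * K * exp (2 * L * t)) eps (cond_pos eps)) as [N HN].
    exists N. intros n m Hn Hm.
    pose proof (picard_iter_cauchy z0 N n t Ht Hn). pose proof (picard_iter_cauchy z0 N m t Ht Hm).
    replace (picard_iter z0 n t - picard_iter z0 m t) with
      ((picard_iter z0 n t - picard_iter z0 N t) - (picard_iter z0 m t - picard_iter z0 N t)) by ring.
    eapply Rle_lt_trans. apply Rabs_triang. rewrite Rabs_Ropp. lra. }
  destruct E as [l Hl]. rewrite (is_lim_seq_unique _ _ Hl). auto.
Qed.

Lemma picard_sol_error z0 n t : 0 <= t ->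
  Rabs (picard_sol z0 t - picard_iter z0 n t) <= 2 * K * (/ 2) ^ n * exp (2 * L * t).
Proof.
  intros Ht. apply (is_lim_seq_Rabs_minus_le (fun k => picard_iter z0 (k + n) t) (fun _ => picard_iter z0 n t)).
  - apply (is_lim_seq_incr_n (fun k => picard_iter z0 k t) n). apply picard_iter_cvg; auto.
  - apply is_lim_seq_const.
  - intros k. apply picard_iter_cauchy; auto. lia.
Qed.

Lemma picard_sol_lipschitz z0 s t : Rabs (picard_sol z0 t - picard_sol z0 s) <= B * Rabs (t - s).
Proof.
  apply Rle_trans with (B * Rabs (Rmax 0 t - Rmax 0 s)).
  - assert (Hr : forall u, picard_sol z0 u = picard_sol z0 (Rmax 0 u)).
    { intros u. unfold picard_sol. rewrite (Rmax_right 0 (Rmax 0 u)) by apply Rmax_l. auto. }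
    rewrite (Hr t), (Hr s).
    eapply is_lim_seq_Rabs_minus_le; try (apply picard_iter_cvg; apply Rmax_l).
    intros; apply picard_iter_lipschitz.
  - apply Rmult_le_compat_l. apply B_nonneg.
    unfold Rmax; repeat destruct Rle_dec; unfold Rabs; repeat destruct Rcase_abs; lra.
Qed.

Lemma continuous_picard_sol z0 x : continuous (picard_sol z0) x.
Proof. apply lipschitz_continuous with B. intros; apply picard_sol_lipschitz. Qed.

Lemma picard_sol_fixpoint z0 t : 0 <= t ->
  picard_sol z0 t = z0 + RInt (fun s => a s + phi (picard_sol z0 s)) 0 t.
Proof.
  intros Ht. set (z := picard_sol z0). set (e := exp (2 * L * t)).
  assert (He : 0 < e) by apply exp_pos.
  pose proof K_nonneg as K0.
  enough (X0 : Rabs (z t - (z0 + RInt (fun s => a s + phi (z s)) 0 t)) = 0).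
  { apply Rabs_eq_0 in X0. lra. }
  apply eq0_of_le_geometric with (2 * K * e + t * (L * (2 * K * e))). apply Rabs_pos.
  intros n. pose proof (pow_le (/ 2) n ltac:(lra)).
  replace (z t - (z0 + RInt (fun s => a s + phi (z s)) 0 t)) with
    ((z t - picard_iter z0 (S n) t) + (RInt (fun s => a s + phi (picard_iter z0 n s)) 0 t -
      RInt (fun s => a s + phi (z s)) 0 t)) by (simpl; ring).
  eapply Rle_trans. apply Rabs_triang.
  pose proof (picard_sol_error z0 (S n) t Ht) as E1. change ((/ 2) ^ S n) with (/ 2 * (/ 2) ^ n) in E1.
  assert (E2 : Rabs (RInt (fun s => a s + phi (picard_iter z0 n s)) 0 t - RInt (fun s => a s + phi (z s)) 0 t)
      <= (t - 0) * (L * (2 * K * (/ 2) ^ n * e))).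
  { pose proof (is_RInt_minus _ _ 0 t _ _ (is_RInt_RInt _ _ _ (iter_ex_RInt z0 n 0 t))
      (is_RInt_RInt _ _ _ (integrand_ex_RInt z (continuous_picard_sol z0) 0 t))) as Im.
    apply (norm_RInt_le_const _ 0 t _ _ Ht) with (2 := Im).
    intros x Hx. unfold minus, plus, opp; simpl.
    replace (a x + phi (picard_iter z0 n x) + - (a x + phi (z x))) with
      (phi (picard_iter z0 n x) - phi (z x)) by ring.
    eapply Rle_trans. apply phi_lipschitz. apply Rmult_le_compat_l. lra.
    rewrite <- Rabs_Ropp, Ropp_minus_distr. eapply Rle_trans. apply picard_sol_error. lra.
    apply Rmult_le_compat_l. apply Rmult_le_pos; [apply Rmult_le_pos|]; lra. apply exp_le. nra. }
  fold z e in E1. rewrite Rminus_0_r in E2.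
  assert (0 <= 2 * K * e * (/ 2) ^ n) by (apply Rmult_le_pos; [apply Rmult_le_pos|]; lra).
  assert (t * (L * (2 * K * (/ 2) ^ n * e)) = t * (L * (2 * K * e)) * (/ 2) ^ n) by ring.
  assert (2 * K * (/ 2 * (/ 2) ^ n) * e = / 2 * (2 * K * e * (/ 2) ^ n)) by ring.
  lra.
Qed.

Lemma picard_sol_spec z0 :
  (forall t, continuous (picard_sol z0) t) /\ picard_sol z0 0 = z0 /\
  (forall t, t <= 0 -> picard_sol z0 t = z0) /\ ode_sol a phi (picard_sol z0).
Proof.
  assert (Z0 : picard_sol z0 0 = z0).
  { rewrite picard_sol_fixpoint by lra. rewrite RInt_point. unfold zero; simpl; ring. }
  split; [apply continuous_picard_sol | split; [auto | split]].
  - intros t Ht. rewrite <- Z0 at 2. unfold picard_sol. rewrite !Rmax_left by lra. auto.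
  - intros t Ht. rewrite Z0. rewrite (picard_sol_fixpoint z0 t Ht) at 1.
    match goal with |- is_RInt ?g _ _ _ => replace (z0 + RInt g 0 t - z0) with (RInt g 0 t) by lra end.
    apply is_RInt_RInt. apply integrand_ex_RInt. apply continuous_picard_sol.
Qed.

End Picard.

(** * Periodicity *)

Lemma two_PI_gt_4 : 4 < 2 * PI.
Proof. pose proof PI2_1. lra. Qed.

Definition nper (t : R) : nat := Z.to_nat (up (Rabs t)).

Lemma Rabs_le_nper t : Rabs t <= INR (nper t).
Proof.
  unfold nper. destruct (archimed (Rabs t)) as [H1 _]. pose proof (Rabs_pos t).
  assert (0 <= up (Rabs t))%Z by (apply le_IZR; lra).
  rewrite INR_IZR_INZ, Z2Nat.id by auto. lra.
Qed.

Lemma nper_shift_nonneg t : 0 <= t + 2 * PI * INR (nper t).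
Proof.
  pose proof (Rabs_le_nper t). pose proof two_PI_gt_4. pose proof (pos_INR (nper t)).
  assert (- t <= Rabs t) by (rewrite <- Rabs_Ropp; apply Rle_abs). nra.
Qed.

Lemma periodic_shift_nonneg (f : R -> R) : (forall t, 0 <= t -> f (t + 2 * PI) = f t) ->
  forall n t, 0 <= t -> f (t + 2 * PI * INR n) = f t.
Proof.
  intros H n. induction n; intros t Ht. simpl. f_equal; ring.
  rewrite S_INR. replace (t + 2 * PI * (INR n + 1)) with ((t + 2 * PI * INR n) + 2 * PI) by ring.
  rewrite H. apply IHn; auto. pose proof (pos_INR n). pose proof PI_RGT_0. nra.
Qed.

Lemma periodic_shift (f : R -> R) : periodic_2pi f -> forall n t, f (t + 2 * PI * INR n) = f t.
Proof.
  intros H n. induction n; intros t. simpl. f_equal; ring.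
  rewrite S_INR. replace (t + 2 * PI * (INR n + 1)) with ((t + 2 * PI * INR n) + 2 * PI) by ring.
  rewrite H. apply IHn.
Qed.

Lemma periodic_eq_of_nonneg (f g : R -> R) : periodic_2pi f -> periodic_2pi g ->
  (forall t, 0 <= t -> f t = g t) -> forall t, f t = g t.
Proof.
  intros Hf Hg H t. rewrite <- (periodic_shift f Hf (nper t) t), <- (periodic_shift g Hg (nper t) t).
  apply H. apply nper_shift_nonneg.
Qed.

(* The 2 pi-periodic function on [R] agreeing with [f] on [[0, +oo)]. *)
Definition periodize (f : R -> R) (t : R) := f (t + 2 * PI * INR (nper t)).

Section Periodize.

Variable f : R -> R.
Hypothesis f_periodic : forall t, 0 <= t -> f (t + 2 * PI) = f t.

Lemma periodize_eq t n : 0 <= t + 2 * PI * INR n -> periodize f t = f (t + 2 * PI * INR n).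
Proof.
  intros Hn. unfold periodize. pose proof (nper_shift_nonneg t).
  destruct (le_lt_dec n (nper t)) as [L|L].
  - replace (t + 2 * PI * INR (nper t)) with ((t + 2 * PI * INR n) + 2 * PI * INR (nper t - n)).
    apply periodic_shift_nonneg; auto. rewrite minus_INR by auto. ring.
  - replace (t + 2 * PI * INR n) with ((t + 2 * PI * INR (nper t)) + 2 * PI * INR (n - nper t)).
    symmetry. apply periodic_shift_nonneg; auto. rewrite minus_INR by lia. ring.
Qed.

Lemma periodize_id t : 0 <= t -> periodize f t = f t.
Proof. intros Ht. rewrite (periodize_eq t 0). simpl. f_equal; ring. simpl; lra. Qed.

Lemma periodize_periodic : periodic_2pi (periodize f).
Proof.
  intros t. pose proof (nper_shift_nonneg t). pose proof PI_RGT_0.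
  rewrite (periodize_eq (t + 2 * PI) (nper t)) by lra. unfold periodize.
  replace (t + 2 * PI + 2 * PI * INR (nper t)) with ((t + 2 * PI * INR (nper t)) + 2 * PI) by ring.
  apply f_periodic; auto.
Qed.

Lemma continuous_periodize : (forall x, continuous f x) -> forall x, continuous (periodize f) x.
Proof.
  intros Hc x. apply continuous_ext_loc with (fun s => f (s + 2 * PI * INR (S (nper x)))).
  - apply (filter_imp (fun s => x - 1 < s < x + 1)). 2: apply locally_open_interval; lra.
    intros s Hs. symmetry. apply periodize_eq. rewrite S_INR.
    pose proof (nper_shift_nonneg x). pose proof two_PI_gt_4. nra.
  - apply continuous_comp with (f := fun s => s + 2 * PI * INR (S (nper x))).
    apply continuous_of_ex_derive. intros; auto_derive; auto. apply Hc.
Qed.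

End Periodize.

Lemma is_RInt_comp_shift (g : R -> R) u v c I :
  is_RInt g (u + c) (v + c) I -> is_RInt (fun x => g (x + c)) u v I.
Proof.
  intros HI. pose proof (is_RInt_comp_lin g 1 c u v I) as C.
  rewrite !Rmult_1_l in C. specialize (C HI).
  apply is_RInt_ext with (2 := C). intros x _. unfold scal; simpl; unfold mult; simpl.
  rewrite !Rmult_1_l. reflexivity.
Qed.

Lemma is_RInt_shift_period (g : R -> R) u v I :
  periodic_2pi g -> is_RInt g (u + 2 * PI) (v + 2 * PI) I -> is_RInt g u v I.
Proof.
  intros Hp HI. apply is_RInt_ext with (fun x => g (x + 2 * PI)).
  intros x _. apply Hp. apply is_RInt_comp_shift; auto.
Qed.

Lemma RInt_shift_period (g : R -> R) u v : periodic_2pi g -> (forall a b, ex_RInt g a b) ->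
  RInt g (u + 2 * PI) (v + 2 * PI) = RInt g u v.
Proof.
  intros Hp He. symmetry. apply is_RInt_unique. apply is_RInt_shift_period; auto.
  apply (RInt_correct (V:=R_CompleteNormedModule)); auto.
Qed.

Lemma RInt_Chasles_R (g : R -> R) a b c : (forall a b, ex_RInt g a b) ->
  RInt g a b + RInt g b c = RInt g a c.
Proof. intros He. exact (RInt_Chasles (V:=R_CompleteNormedModule) g a b c (He _ _) (He _ _)). Qed.

Lemma RInt_point_R (g : R -> R) a : RInt g a a = 0.
Proof. rewrite RInt_point. reflexivity. Qed.

(* Over a period the integral of [g] vanishes, since [F] is periodic; hence the identity on
   [[0, +oo)] propagates to every [t] through [t + 2 pi nper t]. *)
Lemma is_RInt_periodic_extend (g F : R -> R) : periodic_2pi g -> (forall a b, ex_RInt g a b) ->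
  periodic_2pi F -> (forall t, 0 <= t -> is_RInt g 0 t (F t - F 0)) ->
  forall t, is_RInt g 0 t (F t - F 0).
Proof.
  intros Hg He HF HI.
  assert (R0 : forall t, 0 <= t -> RInt g 0 t = F t - F 0) by (intros; apply is_RInt_unique; auto).
  assert (Rswap : forall u, RInt g u 0 = - RInt g 0 u).
  { intros u. pose proof (RInt_Chasles_R g 0 u 0 He). rewrite RInt_point_R in H. lra. }
  assert (S1 : forall u, 0 <= u -> RInt g u (u + 2 * PI) = 0).
  { intros u Hu. rewrite <- (RInt_Chasles_R g u 0 (u + 2 * PI)) by auto.
    rewrite Rswap, !R0, HF by (pose proof PI_RGT_0; lra). lra. }
  assert (S2 : forall n u, RInt g (u + 2 * PI * INR n) (u + 2 * PI * INR n + 2 * PI) = RInt g u (u + 2 * PI)).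
  { induction n; intros u. simpl. rewrite Rmult_0_r, Rplus_0_r. auto.
    rewrite <- (IHn u), S_INR, <- (RInt_shift_period g (u + 2 * PI * INR n)) by auto.
    f_equal; ring. }
  assert (S3 : forall u, RInt g u (u + 2 * PI) = 0).
  { intros u. rewrite <- (S2 (nper u)). apply S1. apply nper_shift_nonneg. }
  assert (S4 : forall n u, RInt g u (u + 2 * PI * INR n) = 0).
  { induction n; intros u. simpl. rewrite Rmult_0_r, Rplus_0_r. apply RInt_point_R.
    rewrite S_INR, <- (RInt_Chasles_R g u (u + 2 * PI * INR n)) by auto.
    rewrite IHn. replace (u + 2 * PI * (INR n + 1)) with (u + 2 * PI * INR n + 2 * PI) by ring.
    rewrite S3. lra. }
  intros t. replace (F t - F 0) with (RInt g 0 t).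
  - apply (RInt_correct (V:=R_CompleteNormedModule)); auto.
  - pose proof (RInt_Chasles_R g 0 t (t + 2 * PI * INR (nper t)) He) as C. rewrite S4 in C.
    rewrite (R0 (t + 2 * PI * INR (nper t))) in C by apply nper_shift_nonneg.
    rewrite periodic_shift in C; auto. lra.
Qed.

Lemma ode_sol_shift_period (a phi z : R -> R) : periodic_2pi a ->
  ode_sol a phi z -> ode_sol a phi (fun t => z (t + 2 * PI)).
Proof.
  intros Hper HI t Ht. pose proof PI_RGT_0.
  apply is_RInt_ext with (fun u => a (u + 2 * PI) + phi (z (u + 2 * PI))).
  { intros x _. rewrite Hper. auto. }
  apply (is_RInt_comp_shift (fun u => a u + phi (z u))).
  rewrite Rplus_0_l. apply is_RInt_diff with 0; apply HI; lra.
Qed.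

(** * The periodic solution of the z-equation *)

Lemma one_sided_of_lipschitz (phi : R -> R) L :
  (forall x y, Rabs (phi x - phi y) <= L * Rabs (x - y)) ->
  forall x y, (x - y) * (phi x - phi y) <= L * (x - y) ^ 2.
Proof.
  intros H x y. pose proof (H x y). pose proof (Rle_abs ((x - y) * (phi x - phi y))).
  rewrite Rabs_mult in H1. pose proof (Rabs_pos (x - y)).
  assert (Rabs (x - y) * Rabs (phi x - phi y) <= Rabs (x - y) * (L * Rabs (x - y)))
    by (apply Rmult_le_compat_l; auto).
  assert (Rabs (x - y) * Rabs (x - y) = (x - y) ^ 2).
  { rewrite <- Rabs_mult, Rabs_pos_eq. ring. apply Rle_0_sqr. }
  assert (Rabs (x - y) * (L * Rabs (x - y)) = L * (x - y) ^ 2) by (rewrite <- H4; ring).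
  lra.
Qed.

Lemma Rabs_le_of_sq_le x y c : 0 <= c -> x ^ 2 <= y ^ 2 * c ^ 2 -> Rabs x <= c * Rabs y.
Proof.
  intros Hc H. replace (c * Rabs y) with (Rabs (y * c)).
  - apply Rsqr_le_abs_0. unfold Rsqr. simpl in H. nra.
  - rewrite Rabs_mult, (Rabs_pos_eq c) by auto. ring.
Qed.

Lemma exp_double x : exp (2 * x) = exp x ^ 2.
Proof. simpl. rewrite Rmult_1_r, <- exp_plus. f_equal; ring. Qed.

Lemma ode_sol_unique (a phi z w : R -> R) (lam : R) :
  (forall x, continuous phi x) -> (forall x y, (x - y) * (phi x - phi y) <= lam * (x - y) ^ 2) ->
  (forall x, continuous z x) -> (forall x, continuous w x) ->
  ode_sol a phi z -> ode_sol a phi w -> z 0 = w 0 -> forall t, 0 <= t -> z t = w t.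
Proof.
  intros Hphi Hl Hz Hw Iz Iw E0 t Ht.
  pose proof (ode_sol_sq_diff_le a phi z w lam t Hphi Hl Ht
    (seg_continuous_of_continuous _ _ _ Hz Ht) (seg_continuous_of_continuous _ _ _ Hw Ht) Iz Iw) as G.
  rewrite E0, Rminus_eq_0 in G. pose proof (pow2_ge_0 (z t - w t)).
  assert (E : (z t - w t) ^ 2 = 0) by (simpl in *; nra).
  destruct (Req_dec (z t - w t) 0) as [D|D]. lra. exfalso. exact (pow_nonzero _ 2 D E).
Qed.

(* A solution returning to its initial value after one period is periodic, by uniqueness
   for the time-shifted solution. *)
Lemma ode_sol_periodic (a phi z : R -> R) (lam : R) :
  periodic_2pi a -> (forall x, continuous phi x) ->
  (forall x y, (x - y) * (phi x - phi y) <= lam * (x - y) ^ 2) ->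
  (forall x, continuous z x) -> ode_sol a phi z -> z (2 * PI) = z 0 ->
  forall t, 0 <= t -> z (t + 2 * PI) = z t.
Proof.
  intros Ha Hphi Hl Hz Iz Hret.
  apply (ode_sol_unique a phi (fun t => z (t + 2 * PI)) z lam); auto.
  - intros x. apply continuous_comp with (f := fun u => u + 2 * PI); auto.
    apply continuous_of_ex_derive. intros; auto_derive; auto.
  - apply ode_sol_shift_period; auto.
  - rewrite Rplus_0_l. auto.
Qed.

Section PeriodicSolution.

Variables (a : R -> R) (b A Ca : R).
Hypothesis b_pos : 0 < b.
Hypothesis A_nonneg : 0 <= A.
Hypothesis a_periodic : periodic_2pi a.
Hypothesis a_pc : piecewise_continuous a.
Hypothesis a_bound : forall t, Rabs (a t) <= Ca.
Hypothesis a_small : Ca <= b * sinh A.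

Let L := b * exp A.
Let sol (x : R) := picard_sol a (drift b A) x.

Lemma L_pos : 0 < L.
Proof. unfold L. apply Rmult_lt_0_compat; auto. apply exp_pos. Qed.

Lemma sol_spec x :
  (forall t, continuous (sol x) t) /\ sol x 0 = x /\
  (forall t, t <= 0 -> sol x t = x) /\ ode_sol a (drift b A) (sol x).
Proof.
  apply (picard_sol_spec a (drift b A) Ca (b * exp A) L); auto.
  - intros; apply drift_bound; auto.
  - intros; apply drift_lipschitz; auto.
  - apply L_pos.
Qed.

Lemma sol_bounded x : Rabs x <= A -> forall t, Rabs (sol x t) <= A.
Proof.
  intros Hx t. destruct (sol_spec x) as [S1 [S2 [S3 S4]]].
  destruct (Rle_dec 0 t).
  - apply (ode_sol_drift_bounded a (sol x) b A Ca); auto. rewrite S2; auto.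
  - rewrite S3 by lra. auto.
Qed.

Lemma drift_one_sided x y : (x - y) * (drift b A x - drift b A y) <= L * (x - y) ^ 2.
Proof. apply one_sided_of_lipschitz. intros; apply drift_lipschitz; auto. Qed.

Lemma sol_lipschitz_initial T x y : 0 <= T -> Rabs (sol x T - sol y T) <= exp (L * T) * Rabs (x - y).
Proof.
  intros HT. destruct (sol_spec x) as [Sx1 [Sx2 [_ Sx4]]]. destruct (sol_spec y) as [Sy1 [Sy2 [_ Sy4]]].
  pose proof (ode_sol_sq_diff_le a (drift b A) (sol x) (sol y) L T) as G.
  rewrite Sx2, Sy2 in G. apply Rabs_le_of_sq_le. left; apply exp_pos.
  rewrite <- exp_double. replace (2 * (L * T)) with (2 * L * T) by ring.
  apply G; auto; try apply seg_continuous_of_continuous; auto.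
  - intros; apply continuous_drift; auto.
  - apply drift_one_sided.
Qed.

Lemma poincare_fixed_point : exists x, Rabs x <= A /\ sol x (2 * PI) = x.
Proof.
  pose proof PI_RGT_0. set (T := 2 * PI).
  set (Q := fun x => sol x T - x).
  assert (Qc : continuity Q).
  { intros x. apply continuity_pt_filterlim. apply lipschitz_continuous with (exp (L * T) + 1).
    intros s t. unfold Q.
    replace (sol s T - s - (sol t T - t)) with ((sol s T - sol t T) - (s - t)) by ring.
    eapply Rle_trans. apply Rabs_triang. rewrite Rabs_Ropp.
    pose proof (sol_lipschitz_initial T s t ltac:(unfold T; lra)). lra. }
  destruct (IVT_cor Q (- A) A Qc ltac:(lra)) as [x [Hx Qx]].
  - pose proof (sol_bounded (- A) ltac:(rewrite Rabs_Ropp, Rabs_pos_eq; lra) T) as H1.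
    pose proof (sol_bounded A ltac:(rewrite Rabs_pos_eq; lra) T) as H2.
    apply Rabs_le_between in H1, H2. unfold Q. nra.
  - exists x. split. apply Rabs_le_between; lra. unfold Q in Qx. fold T. lra.
Qed.

Lemma periodic_ode_sol_exists :
  exists z, periodic_2pi z /\ (forall x, continuous z x) /\ (forall t, Rabs (z t) <= A) /\
    ode_sol a (fun x => - b * sinh x) z.
Proof.
  destruct poincare_fixed_point as [x [Hx Hret]].
  destruct (sol_spec x) as [Z1 [Z2 [_ Z4]]].
  assert (Per : forall t, 0 <= t -> sol x (t + 2 * PI) = sol x t).
  { apply (ode_sol_periodic a (drift b A) (sol x) L); auto.
    - intros; apply continuous_drift; auto.
    - apply drift_one_sided.
    - rewrite Z2. auto. }
  exists (periodize (sol x)). split; [|split; [|split]].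
  - apply periodize_periodic; auto.
  - apply continuous_periodize; auto.
  - intros t. apply sol_bounded; auto.
  - intros t Ht. rewrite !periodize_id by (auto; lra).
    apply is_RInt_ext with (2 := Z4 t Ht). intros s Hs.
    rewrite Rmin_left, Rmax_right in Hs by lra.
    rewrite periodize_id, drift_id by (auto; try apply sol_bounded; auto; lra). auto.
Qed.

End PeriodicSolution.

(** * From the z-equation to the y-equation *)

Lemma sqrt_sq_plus_sinh m z : 0 < m -> sqrt (m ^ 2 + (m * sinh z) ^ 2) = m * cosh z.
Proof.
  intros Hm. replace (m ^ 2 + (m * sinh z) ^ 2) with ((m * cosh z) ^ 2).
  - apply sqrt_pow2. pose proof (cosh_ge_1 z). nra.
  - rewrite !Rpow_mult_distr, cosh_sq. ring.
Qed.

Lemma sqrt_sq_plus_pos m x : 0 < m -> 0 < sqrt (m ^ 2 + x ^ 2).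
Proof. intros. apply sqrt_lt_R0. nra. Qed.

Lemma continuous_sqrt_sq_plus m x : 0 < m -> continuous (fun x => sqrt (m ^ 2 + x ^ 2)) x.
Proof. intros. apply continuous_of_ex_derive. intros y. auto_derive. nra. Qed.

Lemma is_derive_arcsinh_div m x : 0 < m ->
  is_derive (fun x => arcsinh (x / m)) x (/ sqrt (m ^ 2 + x ^ 2)).
Proof.
  intros Hm.
  assert (E : sqrt (m ^ 2 + x ^ 2) = m * sqrt ((x / m) ^ 2 + 1)).
  { replace (m ^ 2 + x ^ 2) with (m ^ 2 * ((x / m) ^ 2 + 1)) by (field; lra).
    rewrite sqrt_mult_alt by nra. rewrite sqrt_pow2; lra. }
  assert (P : 0 < sqrt ((x / m) ^ 2 + 1)) by (apply sqrt_lt_R0; nra).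
  pose proof (is_derive_comp arcsinh (fun x => x / m) x _ (/ m)
    (proj2 (is_derive_Reals _ _ _) (derivable_pt_lim_arcsinh (x / m)))) as D.
  replace (/ sqrt (m ^ 2 + x ^ 2)) with (scal (/ m) (/ sqrt ((x / m) ^ 2 + 1))).
  - apply D. auto_derive; auto. field. lra.
  - rewrite E. unfold scal; simpl; unfold mult; simpl in *. field. split; lra.
Qed.

Lemma sinh_arcsinh_div m x : 0 < m -> m * sinh (arcsinh (x / m)) = x.
Proof. intros. rewrite sinh_arcsinh. field. lra. Qed.

Lemma is_derive_scal_sinh (m : R) (z : R -> R) (s dz : R) :
  is_derive z s dz -> is_derive (fun s => m * sinh (z s)) s (m * cosh (z s) * dz).
Proof.
  intros H. pose proof (is_derive_comp sinh z s _ _ (is_derive_sinh (z s)) H) as D.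
  replace (m * cosh (z s) * dz) with (scal m (scal dz (cosh (z s)))).
  - apply (is_derive_scal (fun s => sinh (z s))). exact D.
  - unfold scal; simpl; unfold mult; simpl. ring.
Qed.

Lemma ode_sol_time_scale (a phi z : R -> R) (nu : R) : 0 < nu -> ode_sol a phi z ->
  ode_sol (fun s => nu * a (nu * s)) (fun x => nu * phi x) (fun s => z (nu * s)).
Proof.
  intros Hnu H t Ht. pose proof (is_RInt_comp_lin (fun s => a s + phi (z s)) nu 0 0 t) as C.
  rewrite Rmult_0_r, !Rplus_0_r in C. specialize (C _ (H (nu * t) ltac:(nra))).
  rewrite Rmult_0_r. apply is_RInt_ext with (2 := C). intros x _.
  unfold scal; simpl; unfold mult; simpl. rewrite Rplus_0_r. ring.
Qed.

Section ChangeOfVariables.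

Variables (r1 r2 : R -> R) (nu m : R).
Hypothesis nu_pos : 0 < nu.
Hypothesis m_pos : 0 < m.
Hypothesis d_pc : piecewise_continuous (fun s => r1 s - r2 s).

Let a_z := fun s => / nu * (r1 s - r2 s).
Let phi_z := fun x => - (/ nu * m) * sinh x.

Lemma pc_on_y_field (l : list R) (T : R) (w : R -> R) :
  pc_on l 0 T (fun s => r1 s - r2 s) -> seg_continuous 0 T w ->
  pc_on l 0 T (fun s => / nu * sqrt (m ^ 2 + w s ^ 2) * (r1 s - r2 s - w s)).
Proof.
  intros Hd Hw.
  apply pc_on_ext with (fun s => (/ nu * sqrt (m ^ 2 + w s ^ 2)) * (- w s + (r1 s - r2 s))).
  2: intros; ring.
  apply pc_on_mult_seg.
  - apply seg_continuous_scal. apply seg_continuous_comp with (phi := fun x => sqrt (m ^ 2 + x ^ 2)); auto.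
    intros; apply continuous_sqrt_sq_plus; auto.
  - apply pc_on_plus_seg; auto. apply seg_continuous_ext with (fun s => -1 * w s). 2: intros; ring.
    apply seg_continuous_scal; auto.
Qed.

Lemma piecewise_continuous_y_field (w : R -> R) : (forall x, continuous w x) ->
  piecewise_continuous (fun s => / nu * sqrt (m ^ 2 + w s ^ 2) * (r1 s - r2 s - w s)).
Proof.
  intros Hw.
  apply piecewise_continuous_ext with (fun s => (/ nu * sqrt (m ^ 2 + w s ^ 2)) * ((r1 s - r2 s) + - w s)).
  2: intros; ring.
  apply piecewise_continuous_mult.
  - apply piecewise_continuous_of_continuous. intros x.
    apply (continuous_mult (fun _ => / nu) (fun s => sqrt (m ^ 2 + w s ^ 2))). apply continuous_const.
    apply continuous_comp with (g := fun x => sqrt (m ^ 2 + x ^ 2)); auto.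
    apply continuous_sqrt_sq_plus; auto.
  - apply piecewise_continuous_plus_continuous; auto. intros; apply (continuous_opp w); auto.
Qed.

Lemma is_y_solution_of_ode_sol (z : R -> R) :
  periodic_2pi r1 -> periodic_2pi r2 -> periodic_2pi z -> (forall x, continuous z x) ->
  ode_sol a_z phi_z z -> is_y_solution r1 r2 nu m (fun t => m * sinh (z t)).
Proof.
  intros P1 P2 Pz Cz Iz. set (y := fun t => m * sinh (z t)).
  assert (Cy : forall x, continuous y x).
  { intros x. apply (continuous_mult (fun _ => m) (fun s => sinh (z s))). apply continuous_const.
    apply continuous_comp; auto. apply continuous_sinh. }
  set (g := fun s => / nu * sqrt (m ^ 2 + y s ^ 2) * (r1 s - r2 s - y s)).
  unfold is_y_solution. apply (is_RInt_periodic_extend g y).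
  - intros s. unfold g, y. rewrite P1, P2, Pz. auto.
  - apply piecewise_continuous_ex_RInt. apply piecewise_continuous_y_field; auto.
  - intros t. unfold y. rewrite Pz. auto.
  - intros T HT. destruct (d_pc 0 T) as [l Hl].
    assert (Lz : pc_on l 0 T (fun s => a_z s + phi_z (z s))).
    { apply pc_on_ext with (fun s => phi_z (z s) + / nu * (r1 s - r2 s)). 2: intros; unfold a_z; ring.
      apply pc_on_plus_seg.
      - apply seg_continuous_of_continuous; auto. intros. unfold phi_z.
        apply (continuous_mult (fun _ => - (/ nu * m)) (fun s => sinh (z s))).
        apply continuous_const. apply continuous_comp; auto; apply continuous_sinh.
      - apply pc_on_mult_seg; auto. apply seg_continuous_const. }
    apply (is_RInt_derive_pc l 0 T y g); auto.
    + apply seg_continuous_of_continuous; auto.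
    + apply pc_on_y_field; auto. apply seg_continuous_of_continuous; auto.
    + intros s Hs Hn.
      pose proof (is_derive_of_is_RInt_pc l 0 T _ z s ltac:(intros; apply Iz; lra) Lz Hs Hn) as dz.
      pose proof (is_derive_scal_sinh m z s _ dz) as dy.
      replace (g s) with (m * cosh (z s) * (a_z s + phi_z (z s))). exact dy.
      unfold g, y, a_z, phi_z. rewrite sqrt_sq_plus_sinh by auto. ring.
Qed.

Lemma seg_continuous_of_is_y_solution (w : R -> R) T :
  0 <= T -> is_y_solution r1 r2 nu m w -> seg_continuous 0 T w.
Proof. intros HT Hw. apply seg_continuous_of_is_RInt with (2 := fun s _ => Hw s); auto. Qed.

Lemma ode_sol_arcsinh_of_is_y_solution (w : R -> R) :
  is_y_solution r1 r2 nu m w -> ode_sol a_z phi_z (fun s => arcsinh (w s / m)).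
Proof.
  intros Iw T HT. set (W := fun s => arcsinh (w s / m)).
  assert (Cw : seg_continuous 0 T w) by (apply seg_continuous_of_is_y_solution; auto).
  assert (CW : seg_continuous 0 T W).
  { apply (seg_continuous_comp 0 T w (fun x => arcsinh (x / m))); auto.
    intros; apply continuous_of_ex_derive. intros; eexists; apply is_derive_arcsinh_div; auto. }
  destruct (d_pc 0 T) as [l Hl].
  apply (is_RInt_derive_pc l 0 T W); auto.
  - apply pc_on_ext with (fun s => phi_z (W s) + / nu * (r1 s - r2 s)). 2: intros; unfold a_z, W; ring.
    apply pc_on_plus_seg. 2: apply pc_on_mult_seg; auto; apply seg_continuous_const.
    apply seg_continuous_scal. apply seg_continuous_comp; auto. apply continuous_sinh.
  - intros s Hs Hn.
    pose proof (is_derive_of_is_RInt_pc l 0 T _ w s ltac:(intros; apply Iw)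
      (pc_on_y_field l T w Hl Cw) Hs Hn) as dw.
    pose proof (is_derive_comp (fun x => arcsinh (x / m)) w s _ _ (is_derive_arcsinh_div m (w s) m_pos) dw) as dW.
    pose proof (sqrt_sq_plus_pos m (w s) m_pos).
    match type of dW with is_derive _ _ ?v =>
      match goal with |- is_derive _ _ ?u => replace u with v end end.
    exact dW.
    unfold scal; simpl; unfold mult; simpl. unfold a_z, phi_z.
    replace (- (/ nu * m) * sinh (arcsinh (w s / m))) with (- / nu * (m * sinh (arcsinh (w s / m)))) by ring.
    rewrite sinh_arcsinh_div by auto. simpl in H. field. split; lra.
Qed.

End ChangeOfVariables.

Lemma sinh_drift_one_sided b x y : 0 <= b ->
  (x - y) * (- b * sinh x - - b * sinh y) <= - b * (x - y) ^ 2.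
Proof. intros. pose proof (sinh_sq_monotone x y). nra. Qed.

(* The equation is contracting ([sinh] is increasing), so the difference of two solutions
   decays like [exp (- b t)] and cannot come back after one period. *)
Lemma periodic_sinh_ode_sol_unique (a z w : R -> R) (b : R) : 0 < b ->
  (forall T, 0 <= T -> seg_continuous 0 T z) -> (forall T, 0 <= T -> seg_continuous 0 T w) ->
  ode_sol a (fun x => - b * sinh x) z -> ode_sol a (fun x => - b * sinh x) w ->
  z (2 * PI) = z 0 -> w (2 * PI) = w 0 -> forall t, 0 <= t -> z t = w t.
Proof.
  intros Hb Cz Cw Iz Iw Pz Pw.
  assert (G : forall T, 0 <= T -> (z T - w T) ^ 2 <= (z 0 - w 0) ^ 2 * exp (2 * - b * T)).
  { intros T HT. apply (ode_sol_sq_diff_le a (fun x => - b * sinh x)); auto.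
    - intros x. apply (continuous_mult (fun _ => - b) sinh). apply continuous_const. apply continuous_sinh.
    - intros; apply sinh_drift_one_sided; lra. }
  assert (D0 : z 0 - w 0 = 0).
  { pose proof PI_RGT_0. pose proof (G (2 * PI) ltac:(lra)) as G2. rewrite Pz, Pw in G2.
    assert (exp (2 * - b * (2 * PI)) < 1) by (rewrite <- exp_0; apply exp_increasing; nra).
    pose proof (pow2_ge_0 (z 0 - w 0)).
    assert (E : (z 0 - w 0) ^ 2 = 0) by nra.
    destruct (Req_dec (z 0 - w 0) 0) as [D|D]; auto. exfalso. exact (pow_nonzero _ 2 D E). }
  intros t Ht. pose proof (G t Ht) as Gt. rewrite D0 in Gt. pose proof (pow2_ge_0 (z t - w t)).
  assert (E : (z t - w t) ^ 2 = 0) by (simpl in *; nra).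
  destruct (Req_dec (z t - w t) 0) as [D|D]. lra. exfalso. exact (pow_nonzero _ 2 D E).
Qed.

(** * The linear system *)

Definition lin_sol (q1 q2 : R -> R) (mu T : R) (x1 x2 : R -> R) : Prop :=
  forall s, 0 <= s <= T ->
    is_RInt (fun s => q1 s * x1 s + mu * (x2 s - x1 s)) 0 s (x1 s - x1 0) /\
    is_RInt (fun s => q2 s * x2 s + mu * (x1 s - x2 s)) 0 s (x2 s - x2 0).

Lemma lin_sol_of_is_solution r1 r2 nu mu x1 x2 T : 0 <= T ->
  is_solution r1 r2 nu mu x1 x2 -> lin_sol (fun s => r1 (nu * s)) (fun s => r2 (nu * s)) mu T x1 x2.
Proof. intros HT H s Hs. apply H. lra. Qed.

Lemma seg_continuous_of_lin_sol q1 q2 mu T x1 x2 : 0 <= T -> lin_sol q1 q2 mu T x1 x2 ->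
  seg_continuous 0 T x1 /\ seg_continuous 0 T x2.
Proof.
  intros HT H. split.
  - apply seg_continuous_of_is_RInt with (fun s => q1 s * x1 s + mu * (x2 s - x1 s)); auto.
    intros; apply H; auto.
  - apply seg_continuous_of_is_RInt with (fun s => q2 s * x2 s + mu * (x1 s - x2 s)); auto.
    intros; apply H; auto.
Qed.

Lemma pc_on_lin_field l T q1 mu x1 x2 :
  pc_on l 0 T q1 -> seg_continuous 0 T x1 -> seg_continuous 0 T x2 ->
  pc_on l 0 T (fun s => q1 s * x1 s + mu * (x2 s - x1 s)).
Proof.
  intros Hq H1 H2. apply pc_on_ext with (fun s => mu * (x2 s - x1 s) + x1 s * q1 s). 2: intros; ring.
  apply pc_on_plus_seg. apply seg_continuous_scal, seg_continuous_minus; auto.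
  apply pc_on_mult_seg; auto.
Qed.

Lemma pc_on_common_list f g : piecewise_continuous f -> piecewise_continuous g ->
  forall a b, exists l, pc_on l a b f /\ pc_on l a b g.
Proof.
  intros Hf Hg a b. destruct (Hf a b) as [l1 L1]. destruct (Hg a b) as [l2 L2].
  exists (l1 ++ l2). split; eapply pc_on_weaken; eauto; try lra; intros ? ?; apply in_or_app; auto.
Qed.

Lemma lin_sol_unique (q1 q2 : R -> R) (mu M T : R) (x1 x2 y1 y2 : R -> R) (l : list R) :
  0 <= T -> 0 <= mu -> (forall s, Rabs (q1 s) <= M) -> (forall s, Rabs (q2 s) <= M) ->
  pc_on l 0 T q1 -> pc_on l 0 T q2 ->
  lin_sol q1 q2 mu T x1 x2 -> lin_sol q1 q2 mu T y1 y2 -> x1 0 = y1 0 -> x2 0 = y2 0 ->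
  x1 T = y1 T /\ x2 T = y2 T.
Proof.
  intros HT Hmu B1 B2 P1 P2 Hx Hy E1 E2.
  destruct (seg_continuous_of_lin_sol _ _ _ _ _ _ HT Hx) as [Cx1 Cx2].
  destruct (seg_continuous_of_lin_sol _ _ _ _ _ _ HT Hy) as [Cy1 Cy2].
  set (D1 := fun s => x1 s - y1 s). set (D2 := fun s => x2 s - y2 s).
  pose proof (energy_gronwall l T M D1 D2
     (fun s => q1 s * D1 s + mu * (D2 s - D1 s)) (fun s => q2 s * D2 s + mu * (D1 s - D2 s))) as G.
  assert (Z : D1 T ^ 2 + D2 T ^ 2 <= 0).
  { eapply Rle_trans. apply G; auto; try (apply seg_continuous_minus; auto).
    - apply pc_on_lin_field; auto; apply seg_continuous_minus; auto.
    - apply pc_on_lin_field; auto; apply seg_continuous_minus; auto.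
    - intros s Hs. destruct (Hx s Hs) as [I1 _]. destruct (Hy s Hs) as [J1 _].
      pose proof (is_RInt_minus _ _ 0 s _ _ I1 J1) as Md.
      replace (D1 s - D1 0) with (minus (x1 s - x1 0) (y1 s - y1 0)) by (unfold D1, minus, plus, opp; simpl; ring).
      apply is_RInt_ext with (2 := Md). intros x _. unfold D1, D2, minus, plus, opp; simpl. ring.
    - intros s Hs. destruct (Hx s Hs) as [_ I2]. destruct (Hy s Hs) as [_ J2].
      pose proof (is_RInt_minus _ _ 0 s _ _ I2 J2) as Md.
      replace (D2 s - D2 0) with (minus (x2 s - x2 0) (y2 s - y2 0)) by (unfold D2, minus, plus, opp; simpl; ring).
      apply is_RInt_ext with (2 := Md). intros x _. unfold D1, D2, minus, plus, opp; simpl. ring.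
    - intros s _. set (d1 := D1 s). set (d2 := D2 s).
      pose proof (Rle_abs (q1 s)). pose proof (Rle_abs (q2 s)). pose proof (B1 s). pose proof (B2 s).
      pose proof (pow2_ge_0 d1). pose proof (pow2_ge_0 d2). pose proof (pow2_ge_0 (d1 - d2)).
      assert (q1 s * d1 ^ 2 <= M * d1 ^ 2) by (apply Rmult_le_compat_r; lra).
      assert (q2 s * d2 ^ 2 <= M * d2 ^ 2) by (apply Rmult_le_compat_r; lra).
      assert (0 <= mu * (d1 - d2) ^ 2) by (apply Rmult_le_pos; auto).
      simpl in *. nra.
    - unfold D1, D2. rewrite E1, E2, !Rminus_eq_0. simpl. lra. }
  unfold D1, D2 in Z. pose proof (pow2_ge_0 (x1 T - y1 T)). pose proof (pow2_ge_0 (x2 T - y2 T)).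
  simpl in *. split; nra.
Qed.

Section ExpCoordinates.

Variables (q1 q2 z : R -> R) (mu u0 : R).
Hypothesis q1_pc : piecewise_continuous q1.
Hypothesis q2_pc : piecewise_continuous q2.
Hypothesis z_continuous : forall x, continuous z x.
Hypothesis z_sol : ode_sol (fun s => q1 s - q2 s) (fun x => - (2 * mu) * sinh x) z.

(* Coordinates [u = ln (x1 x2)] and [z = ln (x1 / x2)]. *)
Definition growth_rate (s : R) := q1 s + q2 s + 2 * mu * cosh (z s) - 2 * mu.
Definition log_product (t : R) := u0 + RInt growth_rate 0 t.
Definition exp_coord1 (t : R) := exp ((log_product t + z t) / 2).
Definition exp_coord2 (t : R) := exp ((log_product t - z t) / 2).

Lemma continuous_scal_cosh_z x : continuous (fun s => 2 * mu * cosh (z s)) x.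
Proof.
  apply (continuous_mult (fun _ => 2 * mu) (fun s => cosh (z s))). apply continuous_const.
  apply continuous_comp; auto. apply continuous_cosh.
Qed.

Lemma pc_on_growth_rate l T : 0 <= T -> pc_on l 0 T q1 -> pc_on l 0 T q2 -> pc_on l 0 T growth_rate.
Proof.
  intros HT H1 H2. apply pc_on_ext with (fun s => (2 * mu * cosh (z s) + - (2 * mu)) + (q1 s + q2 s)).
  2: intros; unfold growth_rate; ring.
  apply pc_on_plus_seg. 2: apply pc_on_plus; auto.
  apply seg_continuous_of_continuous; auto.
  intros. apply (continuous_plus (fun s => 2 * mu * cosh (z s)) (fun _ => - (2 * mu))).
  apply continuous_scal_cosh_z. apply continuous_const.
Qed.

Lemma is_RInt_log_product t : is_RInt growth_rate 0 t (log_product t - log_product 0).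
Proof.
  unfold log_product. rewrite RInt_point_R.
  replace (u0 + RInt growth_rate 0 t - (u0 + 0)) with (RInt growth_rate 0 t) by lra.
  apply (RInt_correct (V:=R_CompleteNormedModule)). apply piecewise_continuous_ex_RInt.
  apply piecewise_continuous_ext with (fun s => (q1 s + q2 s) + (2 * mu * cosh (z s) + - (2 * mu))).
  2: intros; unfold growth_rate; ring.
  apply piecewise_continuous_plus_continuous. apply piecewise_continuous_plus; auto.
  intros. apply (continuous_plus (fun s => 2 * mu * cosh (z s)) (fun _ => - (2 * mu))).
  apply continuous_scal_cosh_z. apply continuous_const.
Qed.

Lemma is_derive_exp_half (v w : R -> R) (s dv dw : R) :
  is_derive v s dv -> is_derive w s dw ->
  is_derive (fun s => exp ((v s + w s) / 2)) s (exp ((v s + w s) / 2) * ((dv + dw) / 2)).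
Proof. intros H1 H2. auto_derive. solve_ex_derive. rewrite_Derive H1. rewrite_Derive H2. unfold Rdiv. ring. Qed.

Lemma exp_coord_is_derive s :
  is_derive log_product s (growth_rate s) ->
  is_derive z s (q1 s - q2 s + - (2 * mu) * sinh (z s)) ->
  is_derive exp_coord1 s (q1 s * exp_coord1 s + mu * (exp_coord2 s - exp_coord1 s)) /\
  is_derive exp_coord2 s (q2 s * exp_coord2 s + mu * (exp_coord1 s - exp_coord2 s)).
Proof.
  intros Du Dz.
  assert (E21 : exp_coord2 s = exp_coord1 s * exp (- z s)).
  { unfold exp_coord1, exp_coord2. rewrite <- exp_plus. f_equal. field. }
  assert (E12 : exp_coord1 s = exp_coord2 s * exp (z s)).
  { rewrite E21, Rmult_assoc, <- exp_plus, Rplus_opp_l, exp_0. ring. }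
  split.
  - pose proof (is_derive_exp_half log_product z s _ _ Du Dz) as d.
    match goal with |- is_derive _ _ ?v => replace v with
      (exp ((log_product s + z s) / 2) * ((growth_rate s + (q1 s - q2 s + - (2 * mu) * sinh (z s))) / 2)) end.
    exact d.
    rewrite E21. fold (exp_coord1 s). unfold growth_rate. rewrite <- cosh_minus_sinh. field.
  - assert (Dz' : is_derive (fun s => - z s) s (- (q1 s - q2 s + - (2 * mu) * sinh (z s)))).
    { auto_derive. solve_ex_derive. rewrite_Derive Dz. ring. }
    pose proof (is_derive_exp_half log_product (fun s => - z s) s _ _ Du Dz') as d.
    match goal with |- is_derive _ _ ?v => replace v with
      (exp ((log_product s + - z s) / 2) * ((growth_rate s + - (q1 s - q2 s + - (2 * mu) * sinh (z s))) / 2)) end.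
    exact d.
    change (exp ((log_product s + - z s) / 2)) with (exp_coord2 s).
    rewrite E12. unfold growth_rate. rewrite <- cosh_plus_sinh. field.
Qed.

Lemma exp_coord_lin_sol T : 0 <= T -> lin_sol q1 q2 mu T exp_coord1 exp_coord2.
Proof.
  intros HT.
  destruct (pc_on_common_list q1 q2 q1_pc q2_pc 0 T) as [l [P1 P2]].
  assert (Pz : pc_on l 0 T (fun s => (q1 s - q2 s) + - (2 * mu) * sinh (z s))).
  { apply pc_on_ext with (fun s => - (2 * mu) * sinh (z s) + (q1 s + -1 * q2 s)). 2: intros; ring.
    apply pc_on_plus_seg. 2: apply pc_on_plus, pc_on_mult_seg; auto; apply seg_continuous_const.
    apply seg_continuous_scal. apply seg_continuous_of_continuous; auto.
    intros; apply continuous_comp; auto; apply continuous_sinh. }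
  assert (D : forall s, 0 < s < T -> ~ In s l ->
    is_derive exp_coord1 s (q1 s * exp_coord1 s + mu * (exp_coord2 s - exp_coord1 s)) /\
    is_derive exp_coord2 s (q2 s * exp_coord2 s + mu * (exp_coord1 s - exp_coord2 s))).
  { intros s Hs Hn. apply exp_coord_is_derive.
    - apply (is_derive_of_is_RInt_pc l 0 T growth_rate); auto.
      intros; apply is_RInt_log_product. apply pc_on_growth_rate; auto.
    - apply (is_derive_of_is_RInt_pc l 0 T (fun s => (q1 s - q2 s) + - (2 * mu) * sinh (z s)) z s);
        auto. intros; apply z_sol; lra. }
  assert (Cu : seg_continuous 0 T log_product)
    by (apply seg_continuous_of_is_RInt with growth_rate; auto; intros; apply is_RInt_log_product).
  assert (Cz : seg_continuous 0 T z) by (apply seg_continuous_of_continuous; auto).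
  assert (C1 : seg_continuous 0 T exp_coord1).
  { apply (seg_continuous_comp 0 T (fun t => (log_product t + z t) / 2) exp).
    2: apply continuous_exp. apply seg_continuous_ext with (fun t => / 2 * (log_product t + z t)).
    2: intros; unfold Rdiv; ring. apply seg_continuous_scal, seg_continuous_plus; auto. }
  assert (C2 : seg_continuous 0 T exp_coord2).
  { apply (seg_continuous_comp 0 T (fun t => (log_product t - z t) / 2) exp).
    2: apply continuous_exp. apply seg_continuous_ext with (fun t => / 2 * (log_product t - z t)).
    2: intros; unfold Rdiv; ring. apply seg_continuous_scal, seg_continuous_minus; auto. }
  intros s Hs. split.
  - apply (is_RInt_derive_pc l 0 s); try lra.
    + apply seg_continuous_sub with 0 T; auto; lra.
    + apply pc_on_weaken with l 0 T; try lra. apply pc_on_lin_field; auto. intros ? ?; auto.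
    + intros t Ht Hn. apply D; auto; lra.
  - apply (is_RInt_derive_pc l 0 s); try lra.
    + apply seg_continuous_sub with 0 T; auto; lra.
    + apply pc_on_weaken with l 0 T; try lra. apply pc_on_lin_field; auto. intros ? ?; auto.
    + intros t Ht Hn. apply D; auto; lra.
Qed.

End ExpCoordinates.

Lemma ln_product_of_lin_sol (q1 q2 z x1 x2 : R -> R) (mu M : R) :
  piecewise_continuous q1 -> piecewise_continuous q2 -> (forall s, Rabs (q1 s) <= M) -> (forall s, Rabs (q2 s) <= M) ->
  0 < mu -> (forall x, continuous z x) ->
  ode_sol (fun s => q1 s - q2 s) (fun x => - (2 * mu) * sinh x) z ->
  0 < x1 0 -> 0 < x2 0 -> z 0 = ln (x1 0 / x2 0) -> (forall T, 0 <= T -> lin_sol q1 q2 mu T x1 x2) ->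
  forall t, 0 <= t -> ln (x1 t * x2 t) = log_product q1 q2 z mu (ln (x1 0 * x2 0)) t.
Proof.
  intros P1 P2 B1 B2 Hmu Cz Iz X1 X2 Z0 Hx t Ht.
  set (u0 := ln (x1 0 * x2 0)).
  assert (U0 : log_product q1 q2 z mu u0 0 = u0).
  { unfold log_product. rewrite RInt_point_R. ring. }
  destruct (pc_on_common_list q1 q2 P1 P2 0 t) as [l [L1 L2]].
  destruct (lin_sol_unique q1 q2 mu M t x1 x2 (exp_coord1 q1 q2 z mu u0) (exp_coord2 q1 q2 z mu u0) l)
    as [E1 E2]; auto; try lra.
  - apply exp_coord_lin_sol; auto.
  - unfold exp_coord1. rewrite U0, Z0. unfold u0. rewrite ln_mult, ln_div by auto.
    replace ((ln (x1 0) + ln (x2 0) + (ln (x1 0) - ln (x2 0))) / 2) with (ln (x1 0)) by field.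
    rewrite exp_ln; auto.
  - unfold exp_coord2. rewrite U0, Z0. unfold u0. rewrite ln_mult, ln_div by auto.
    replace ((ln (x1 0) + ln (x2 0) - (ln (x1 0) - ln (x2 0))) / 2) with (ln (x2 0)) by field.
    rewrite exp_ln; auto.
  - rewrite E1, E2. unfold exp_coord1, exp_coord2. rewrite <- exp_plus, ln_exp. field.
Qed.

(** * The growth rate *)

Lemma RInt_periodic_mean_error (H : R -> R) (MH : R) :
  periodic_2pi H -> (forall a b, ex_RInt H a b) -> (forall x, Rabs (H x) <= MH) ->
  forall s, 0 <= s -> Rabs (RInt H 0 s - RInt H 0 (2 * PI) / (2 * PI) * s) <= MH * (2 * PI) + Rabs (RInt H 0 (2 * PI)).
Proof.
  intros Hper HEx HB. pose proof PI_RGT_0.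
  set (I := RInt H 0 (2 * PI)). set (Q := fun s => RInt H 0 s - I / (2 * PI) * s).
  assert (Qp : forall s, Q (s + 2 * PI) = Q s).
  { intros s. unfold Q, I. rewrite <- (RInt_Chasles_R H 0 (2 * PI) (s + 2 * PI)) by auto.
    replace (RInt H (2 * PI) (s + 2 * PI)) with (RInt H 0 s).
    - field. lra.
    - rewrite <- (RInt_shift_period H 0 s) by auto. rewrite Rplus_0_l. auto. }
  assert (MH0 : 0 <= MH) by (eapply Rle_trans; [apply Rabs_pos | apply (HB 0)]).
  assert (Qb0 : forall s, 0 <= s <= 2 * PI -> Rabs (Q s) <= MH * (2 * PI) + Rabs I).
  { intros s Hs. unfold Q. eapply Rle_trans. apply Rabs_triang. rewrite Rabs_Ropp.
    pose proof (RInt_lipschitz H MH HEx HB 0 s) as Js. rewrite RInt_point_R, Rminus_0_r, Rminus_0_r,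
      (Rabs_pos_eq s) in Js by lra.
    assert (Rabs (I / (2 * PI) * s) <= Rabs I).
    { rewrite Rabs_mult, (Rabs_pos_eq s) by lra. unfold Rdiv. rewrite Rabs_mult, (Rabs_pos_eq (/ (2 * PI))).
      2: left; apply Rinv_0_lt_compat; lra.
      apply Rle_trans with (Rabs I * / (2 * PI) * (2 * PI)). apply Rmult_le_compat_l.
      apply Rmult_le_pos. apply Rabs_pos. left; apply Rinv_0_lt_compat; lra. lra. right; field; lra. }
    nra. }
  assert (Qbn : forall n s, 0 <= s <= 2 * PI * INR n -> Rabs (Q s) <= MH * (2 * PI) + Rabs I).
  { induction n; intros s Hs.
    - simpl in Hs. apply Qb0. lra.
    - destruct (Rle_dec s (2 * PI)). apply Qb0; lra.
      replace s with ((s - 2 * PI) + 2 * PI) by ring. rewrite Qp. apply IHn. rewrite S_INR in Hs. lra. }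
  intros s Hs. apply (Qbn (nper s)). split; auto. pose proof (Rabs_le_nper s) as Ns.
  rewrite Rabs_pos_eq in Ns by lra. pose proof two_PI_gt_4. pose proof (pos_INR (nper s)). nra.
Qed.

Lemma is_lim_of_Rabs_le_div (f : R -> R) (l B : R) : 0 <= B ->
  (forall t, 0 < t -> Rabs (f t - l) <= B / t) -> is_lim f p_infty l.
Proof.
  intros HB H. apply is_lim_spec. intros eps. pose proof (cond_pos eps).
  exists (B / eps + 1). intros t Ht.
  assert (Tp : 0 < t).
  { assert (0 <= B / eps) by (apply Rmult_le_pos; auto; left; apply Rinv_0_lt_compat; auto). lra. }
  eapply Rle_lt_trans. apply H; auto.
  apply Rmult_lt_reg_r with t; auto. unfold Rdiv. rewrite Rmult_assoc, Rinv_l, Rmult_1_r by lra.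
  assert (B / eps < t) by lra.
  apply Rmult_lt_reg_r with (/ eps). apply Rinv_0_lt_compat; auto.
  replace (eps * t * / eps) with t by (field; lra). exact H1.
Qed.

Lemma is_RInt_comp_scale (H : R -> R) nu t : 0 < nu -> (forall a b, ex_RInt H a b) ->
  is_RInt (fun s => H (nu * s)) 0 t (/ nu * RInt H 0 (nu * t)).
Proof.
  intros Hnu He.
  pose proof (is_RInt_comp_lin H nu 0 0 t (RInt H 0 (nu * t))) as C.
  rewrite Rmult_0_r, !Rplus_0_r in C.
  specialize (C (RInt_correct (V:=R_CompleteNormedModule) _ _ _ (He _ _))).
  apply is_RInt_ext with (fun s => / nu * scal nu (H (nu * s + 0))).
  { intros x _. unfold scal; simpl; unfold mult; simpl. rewrite Rplus_0_r. field. lra. }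
  apply (is_RInt_scal (V:=R_NormedModule) _ 0 t (/ nu)). exact C.
Qed.

Lemma sinh_ode_sol_exists (a : R -> R) (b Ca z0 : R) :
  0 < b -> piecewise_continuous a -> (forall t, Rabs (a t) <= Ca) ->
  exists z, (forall x, continuous z x) /\ z 0 = z0 /\ (forall t, Rabs (z t) <= Rmax (Rabs z0) (Ca / b)) /\
    ode_sol a (fun x => - b * sinh x) z.
Proof.
  intros Hb Ha HCa. set (A := Rmax (Rabs z0) (Ca / b)).
  assert (Ca0 : 0 <= Ca) by (eapply Rle_trans; [apply Rabs_pos | apply (HCa 0)]).
  assert (A0 : 0 <= A) by (eapply Rle_trans; [apply Rabs_pos | apply Rmax_l]).
  assert (CaA : Ca <= b * sinh A).
  { pose proof (sinh_ge_id A A0). pose proof (Rmax_r (Rabs z0) (Ca / b)). fold A in H0.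
    replace Ca with (b * (Ca / b)) by (field; lra). apply Rmult_le_compat_l; lra. }
  destruct (picard_sol_spec a (drift b A) Ca (b * exp A) (b * exp A) Ha HCa) with z0 as [Z1 [Z2 [Z3 Z4]]].
  { intros; apply drift_bound; auto. }
  { intros; apply drift_lipschitz; auto. }
  { apply Rmult_lt_0_compat; auto. apply exp_pos. }
  set (z := picard_sol a (drift b A) z0) in *.
  assert (Zb : forall t, Rabs (z t) <= A).
  { intros t. destruct (Rle_dec 0 t).
    - revert t r. apply (ode_sol_drift_bounded a z b A Ca); auto. rewrite Z2. apply Rmax_l.
    - rewrite Z3 by lra. apply Rmax_l. }
  exists z. split; [|split; [|split]]; auto.
  apply ode_sol_ext with (2 := Z4). intros s. rewrite drift_id; auto.
Qed.

Section GrowthRate.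

Variables (r1 r2 zp : R -> R) (nu mu M1 M2 A : R).
Hypothesis r1_bound : forall t, Rabs (r1 t) <= M1.
Hypothesis r2_bound : forall t, Rabs (r2 t) <= M2.
Hypothesis r1_pc : piecewise_C1 r1.
Hypothesis r2_pc : piecewise_C1 r2.
Hypothesis r1_periodic : periodic_2pi r1.
Hypothesis r2_periodic : periodic_2pi r2.
Hypothesis nu_pos : 0 < nu.
Hypothesis mu_pos : 0 < mu.
Hypothesis zp_continuous : forall x, continuous zp x.
Hypothesis zp_bound : forall t, Rabs (zp t) <= A.
Hypothesis zp_periodic : periodic_2pi zp.
Hypothesis zp_sol : ode_sol (fun s => / nu * (r1 s - r2 s)) (fun x => - (/ nu * (2 * mu)) * sinh x) zp.

Let q1 := fun s => r1 (nu * s).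
Let q2 := fun s => r2 (nu * s).
Let zq := fun s => zp (nu * s).

Definition mean_integrand (s : R) := r1 s + r2 s + 2 * mu * cosh (zp s) - 2 * mu.

Lemma q1_pc : piecewise_continuous q1.
Proof. apply piecewise_continuous_of_C1_scaled; auto. Qed.

Lemma q2_pc : piecewise_continuous q2.
Proof. apply piecewise_continuous_of_C1_scaled; auto. Qed.

Lemma zq_sol : ode_sol (fun s => q1 s - q2 s) (fun x => - (2 * mu) * sinh x) zq.
Proof.
  apply ode_sol_ext with (2 := ode_sol_time_scale _ _ _ nu nu_pos zp_sol).
  intros s. unfold q1, q2, zq. field. lra.
Qed.

Lemma continuous_zq x : continuous zq x.
Proof.
  apply continuous_comp with (f := fun s => nu * s). apply continuous_of_ex_derive.
  intros; auto_derive; auto. apply zp_continuous.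
Qed.

Lemma mean_integrand_ex_RInt a b : ex_RInt mean_integrand a b.
Proof.
  apply piecewise_continuous_ex_RInt.
  apply piecewise_continuous_ext with (fun s => (r1 s + r2 s) + (2 * mu * cosh (zp s) + - (2 * mu))).
  2: intros; unfold mean_integrand; ring.
  apply piecewise_continuous_plus_continuous.
  apply piecewise_continuous_plus; apply piecewise_continuous_of_C1; auto.
  intros x. apply (continuous_plus (fun s => 2 * mu * cosh (zp s)) (fun _ => - (2 * mu))).
  apply (continuous_mult (fun _ => 2 * mu) (fun s => cosh (zp s))). apply continuous_const.
  apply continuous_comp; auto. apply continuous_cosh. apply continuous_const.
Qed.

Lemma mean_integrand_bound x : Rabs (mean_integrand x) <= M1 + M2 + 2 * mu * exp A + 2 * mu.
Proof.
  unfold mean_integrand. pose proof (r1_bound x). pose proof (r2_bound x).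
  pose proof (cosh_le_exp A (zp x) (zp_bound x)). pose proof (cosh_ge_1 (zp x)).
  unfold Rabs in *; repeat destruct Rcase_abs; nra.
Qed.

Lemma mean_integrand_periodic : periodic_2pi mean_integrand.
Proof. intros t. unfold mean_integrand. rewrite r1_periodic, r2_periodic, zp_periodic. auto. Qed.

Section Transient.

Variables (zx : R -> R) (Az : R).
Hypothesis zx_continuous : forall x, continuous zx x.
Hypothesis zx_bound : forall t, Rabs (zx t) <= Az.
Hypothesis zx_sol : ode_sol (fun s => q1 s - q2 s) (fun x => - (2 * mu) * sinh x) zx.

Lemma transient_decay T : 0 <= T -> Rabs (zx T - zq T) <= exp (- (2 * mu) * T) * Rabs (zx 0 - zq 0).
Proof.
  intros HT. apply Rabs_le_of_sq_le. left; apply exp_pos. rewrite <- exp_double.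
  replace (2 * (- (2 * mu) * T)) with (2 * - (2 * mu) * T) by ring.
  apply (ode_sol_sq_diff_le (fun s => q1 s - q2 s) (fun x => - (2 * mu) * sinh x)); auto.
  - intros x. apply (continuous_mult (fun _ => - (2 * mu)) sinh). apply continuous_const. apply continuous_sinh.
  - intros; apply sinh_drift_one_sided; lra.
  - apply seg_continuous_of_continuous; auto.
  - apply seg_continuous_of_continuous; auto. apply continuous_zq.
  - apply zq_sol.
Qed.

Let E := fun s => 2 * mu * (cosh (zx s) - cosh (zq s)).

(* [cosh] is [exp Ab]-Lipschitz on the common bound and the difference decays like
   [exp (- 2 mu t)], whose integral is bounded. *)
Lemma RInt_transient_bound t : 0 <= t ->
  Rabs (RInt E 0 t) <= exp (Rmax Az A) * Rabs (zx 0 - zq 0).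
Proof.
  intros Ht. set (Ab := Rmax Az A). set (m := 2 * mu). set (d0 := Rabs (zx 0 - zq 0)).
  assert (Hm : 0 < m) by (unfold m; lra).
  assert (EEx : ex_RInt E 0 t).
  { apply (ex_RInt_continuous (V:=R_CompleteNormedModule)). intros x _.
    apply (continuous_mult (fun _ => 2 * mu) (fun s => cosh (zx s) - cosh (zq s))). apply continuous_const.
    apply (continuous_minus (fun s => cosh (zx s)) (fun s => cosh (zq s)));
      apply continuous_comp; auto using continuous_zq, continuous_cosh. }
  pose proof (is_RInt_exp_lin (- m) (m * exp Ab * d0) t ltac:(lra)) as Ie.
  pose proof (exp_pos Ab). pose proof (Rabs_pos (zx 0 - zq 0)).
  eapply Rle_trans. apply (norm_RInt_le E _ 0 t _ _ Ht) with (2 := RInt_correct _ _ _ EEx) (3 := Ie).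
  - intros x Hx. change (Rabs (E x) <= m * exp Ab * d0 * exp (- m * x)). unfold E.
    rewrite Rabs_mult, (Rabs_pos_eq (2 * mu)) by lra. fold m.
    pose proof (cosh_lipschitz Ab (zx x) (zq x)
      ltac:(eapply Rle_trans; [apply zx_bound | apply Rmax_l])
      ltac:(eapply Rle_trans; [apply zp_bound | apply Rmax_r])) as Cl.
    pose proof (transient_decay x ltac:(lra)) as Dx. fold m d0 in Dx. pose proof (exp_pos (- m * x)).
    assert (exp Ab * Rabs (zx x - zq x) <= exp Ab * (exp (- m * x) * d0)) by (apply Rmult_le_compat_l; lra).
    nra.
  - pose proof (exp_pos (- m * t)). pose proof (exp_le (- m * t) 0 ltac:(nra)) as El. rewrite exp_0 in El.
    replace (m * exp Ab * d0 * (exp (- m * t) - 1) / - m) with (exp Ab * d0 * (1 - exp (- m * t))) by (field; lra).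
    assert (0 <= exp Ab * d0) by (apply Rmult_le_pos; unfold d0; lra). nra.
Qed.

Lemma RInt_growth_rate_split t : 0 <= t ->
  RInt (growth_rate q1 q2 zx mu) 0 t = / nu * RInt mean_integrand 0 (nu * t) + RInt E 0 t.
Proof.
  intros Ht. apply is_RInt_unique.
  apply is_RInt_ext with (fun s => plus (mean_integrand (nu * s)) (E s)).
  { intros s _. unfold plus, E; simpl. unfold growth_rate, mean_integrand, q1, q2, zq. ring. }
  apply (is_RInt_plus (V:=R_NormedModule)).
  - apply is_RInt_comp_scale; auto. apply mean_integrand_ex_RInt.
  - apply (RInt_correct (V:=R_CompleteNormedModule)). apply (ex_RInt_continuous (V:=R_CompleteNormedModule)).
    intros x _. apply (continuous_mult (fun _ => 2 * mu) (fun s => cosh (zx s) - cosh (zq s))).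
    apply continuous_const.
    apply (continuous_minus (fun s => cosh (zx s)) (fun s => cosh (zq s)));
      apply continuous_comp; auto using continuous_zq, continuous_cosh.
Qed.

Let I := RInt mean_integrand 0 (2 * PI).
Let BQ := (M1 + M2 + 2 * mu * exp A + 2 * mu) * (2 * PI) + Rabs I.
Let BE := exp (Rmax Az A) * Rabs (zx 0 - zq 0).

Lemma growth_rate_error u0 t : 0 < t ->
  Rabs ((u0 + RInt (growth_rate q1 q2 zx mu) 0 t) / t - I / (2 * PI)) <= (Rabs u0 + / nu * BQ + BE) / t.
Proof.
  intros Ht. pose proof PI_RGT_0. rewrite RInt_growth_rate_split by lra.
  pose proof (RInt_periodic_mean_error mean_integrand _ mean_integrand_periodic mean_integrand_ex_RInt
    mean_integrand_bound (nu * t) ltac:(nra)) as Q. fold I BQ in Q.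
  pose proof (RInt_transient_bound t ltac:(lra)) as T. fold E BE in T.
  replace ((u0 + (/ nu * RInt mean_integrand 0 (nu * t) + RInt E 0 t)) / t - I / (2 * PI)) with
    ((u0 + / nu * (RInt mean_integrand 0 (nu * t) - I / (2 * PI) * (nu * t)) + RInt E 0 t) / t)
    by (field; lra).
  unfold Rdiv. rewrite Rabs_mult, (Rabs_pos_eq (/ t)) by (left; apply Rinv_0_lt_compat; auto).
  apply Rmult_le_compat_r. left; apply Rinv_0_lt_compat; auto.
  eapply Rle_trans. apply Rabs_triang. eapply Rle_trans. apply Rplus_le_compat_r. apply Rabs_triang.
  rewrite Rabs_mult, (Rabs_pos_eq (/ nu)) by (left; apply Rinv_0_lt_compat; auto).
  assert (/ nu * Rabs (RInt mean_integrand 0 (nu * t) - I / (2 * PI) * (nu * t)) <= / nu * BQ)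
    by (apply Rmult_le_compat_l; auto; left; apply Rinv_0_lt_compat; auto).
  lra.
Qed.

Lemma growth_rate_error_nonneg u0 : 0 <= Rabs u0 + / nu * BQ + BE.
Proof.
  pose proof PI_RGT_0. pose proof (Rabs_pos u0). pose proof (Rabs_pos I). pose proof (exp_pos (Rmax Az A)).
  pose proof (Rabs_pos (zx 0 - zq 0)). pose proof (exp_pos A). pose proof (Rinv_0_lt_compat nu nu_pos).
  pose proof (Rle_trans _ _ _ (Rabs_pos _) (r1_bound 0)). pose proof (Rle_trans _ _ _ (Rabs_pos _) (r2_bound 0)).
  assert (0 <= BQ) by (unfold BQ; apply Rplus_le_le_0_compat; auto; apply Rmult_le_pos; nra).
  assert (0 <= BE) by (unfold BE; nra). nra.
Qed.

End Transient.

Lemma q_diff_bound s : Rabs (q1 s - q2 s) <= M1 + M2.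
Proof.
  eapply Rle_trans. apply Rabs_triang. rewrite Rabs_Ropp.
  pose proof (r1_bound (nu * s)). pose proof (r2_bound (nu * s)). unfold q1, q2. lra.
Qed.

(* The transient [zx] starts from [ln (x1 0 / x2 0)] and is attracted by the periodic
   regime [zq]; the mean growth rate only sees the latter. *)
Theorem growth_rate_limit (x1 x2 : R -> R) :
  0 < x1 0 -> 0 < x2 0 -> is_solution r1 r2 nu mu x1 x2 ->
  is_lim (fun t => ln (x1 t * x2 t) / t) p_infty (RInt mean_integrand 0 (2 * PI) / (2 * PI)).
Proof.
  intros X1 X2 Hx.
  destruct (sinh_ode_sol_exists (fun s => q1 s - q2 s) (2 * mu) (M1 + M2) (ln (x1 0 / x2 0)))
    as [zx [Cx [Zx0 [Zxb Zxs]]]]; auto using q_diff_bound; try lra.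
  { apply piecewise_continuous_minus. apply q1_pc. apply q2_pc. }
  set (Az := Rmax (Rabs (ln (x1 0 / x2 0))) ((M1 + M2) / (2 * mu))) in Zxb.
  apply (is_lim_of_Rabs_le_div _ _ _ (growth_rate_error_nonneg zx Az (ln (x1 0 * x2 0)))).
  intros t Ht. rewrite (ln_product_of_lin_sol q1 q2 zx x1 x2 mu (Rmax M1 M2)); auto; try lra.
  - apply growth_rate_error; auto.
  - apply q1_pc.
  - apply q2_pc.
  - intros s. eapply Rle_trans. apply r1_bound. apply Rmax_l.
  - intros s. eapply Rle_trans. apply r2_bound. apply Rmax_r.
  - intros T HT. apply lin_sol_of_is_solution; auto.
Qed.

End GrowthRate.

Lemma z_equation_periodic_solution (r1 r2 : R -> R) (nu m M1 M2 : R) :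
  0 < nu -> 0 < m -> periodic_2pi r1 -> periodic_2pi r2 ->
  (forall t, Rabs (r1 t) <= M1) -> (forall t, Rabs (r2 t) <= M2) ->
  piecewise_continuous (fun s => r1 s - r2 s) ->
  exists zp, periodic_2pi zp /\ (forall x, continuous zp x) /\ (forall t, Rabs (zp t) <= (M1 + M2) / m) /\
    ode_sol (fun s => / nu * (r1 s - r2 s)) (fun x => - (/ nu * m) * sinh x) zp.
Proof.
  intros Hnu Hm P1 P2 B1 B2 Hd.
  pose proof (Rle_trans _ _ _ (Rabs_pos _) (B1 0)). pose proof (Rle_trans _ _ _ (Rabs_pos _) (B2 0)).
  pose proof (Rinv_0_lt_compat nu Hnu).
  assert (A0 : 0 <= (M1 + M2) / m) by (apply Rmult_le_pos; [lra | left; apply Rinv_0_lt_compat; auto]).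
  apply (periodic_ode_sol_exists _ (/ nu * m) ((M1 + M2) / m) (/ nu * (M1 + M2))); auto.
  - apply Rmult_lt_0_compat; auto.
  - intros t. rewrite P1, P2. auto.
  - apply piecewise_continuous_scal; auto.
  - intros t. rewrite Rabs_mult, Rabs_pos_eq by lra. apply Rmult_le_compat_l. lra.
    eapply Rle_trans. apply Rabs_triang. rewrite Rabs_Ropp. pose proof (B1 t). pose proof (B2 t). lra.
  - pose proof (sinh_ge_id _ A0).
    replace (/ nu * (M1 + M2)) with (/ nu * m * ((M1 + M2) / m)) by (field; lra).
    apply Rmult_le_compat_l; auto. left; apply Rmult_lt_0_compat; auto.
Qed.

Lemma periodic_y_solution_unique (r1 r2 z w : R -> R) (nu m : R) :
  0 < nu -> 0 < m -> piecewise_continuous (fun s => r1 s - r2 s) ->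
  periodic_2pi z -> (forall x, continuous z x) ->
  ode_sol (fun s => / nu * (r1 s - r2 s)) (fun x => - (/ nu * m) * sinh x) z ->
  periodic_2pi w -> is_y_solution r1 r2 nu m w -> forall t, w t = m * sinh (z t).
Proof.
  intros Hnu Hm Hd Pz Cz Iz Pw Iw. pose proof PI_RGT_0.
  set (W := fun s => arcsinh (w s / m)).
  assert (EW : forall t, 0 <= t -> W t = z t).
  { apply (periodic_sinh_ode_sol_unique (fun s => / nu * (r1 s - r2 s)) W z (/ nu * m)).
    - apply Rmult_lt_0_compat; auto. apply Rinv_0_lt_compat; auto.
    - intros T HT. apply (seg_continuous_comp 0 T w (fun x => arcsinh (x / m))).
      + apply (seg_continuous_of_is_y_solution r1 r2 nu m); auto.
      + intros; apply continuous_of_ex_derive. intros; eexists; apply is_derive_arcsinh_div; auto.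
    - intros T HT. apply seg_continuous_of_continuous; auto.
    - apply ode_sol_arcsinh_of_is_y_solution; auto.
    - auto.
    - unfold W. replace (2 * PI) with (0 + 2 * PI) by ring. rewrite Pw. auto.
    - replace (2 * PI) with (0 + 2 * PI) by ring. rewrite Pz. auto. }
  apply (periodic_eq_of_nonneg w (fun t => m * sinh (z t))); auto.
  - intros t. rewrite Pz. auto.
  - intros t Ht. rewrite <- EW by auto. unfold W. rewrite sinh_arcsinh_div; auto.
Qed.

Theorem mainTheorem4 (r1 r2 : R -> R) (nu mu : R) :
  periodic_2pi r1 -> periodic_2pi r2 ->
  bounded_fun r1 -> bounded_fun r2 ->
  piecewise_C1 r1 -> piecewise_C1 r2 ->
  0 < nu -> 0 < mu ->
  let m := 2 * mu in
  exists y : R -> R,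
    (periodic_2pi y /\ is_y_solution r1 r2 nu m y) /\
    (forall z : R -> R, periodic_2pi z -> is_y_solution r1 r2 nu m z ->
        forall t, z t = y t) /\
    exists I : R,
      is_RInt (fun s => r1 s + r2 s + sqrt (m ^ 2 + y s ^ 2) - m) 0 (2 * PI) I /\
      forall x1 x2 : R -> R,
        0 < x1 0 -> 0 < x2 0 -> is_solution r1 r2 nu mu x1 x2 ->
        is_lim (fun t => ln (x1 t * x2 t) / t) p_infty (I / (2 * PI)).
Proof.
  intros P1 P2 [M1 B1] [M2 B2] C1 C2 Hnu Hmu m.
  assert (Hm : 0 < m) by (unfold m; lra).
  assert (Hd : piecewise_continuous (fun s => r1 s - r2 s))
    by (apply piecewise_continuous_minus; apply piecewise_continuous_of_C1; auto).
  destruct (z_equation_periodic_solution r1 r2 nu m M1 M2) as [zp [Pz [Cz [Bz Iz]]]]; auto.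
  set (y := fun t => m * sinh (zp t)).
  exists y. split; [split|split].
  - intros t. unfold y. rewrite Pz. auto.
  - apply is_y_solution_of_ode_sol; auto.
  - intros w Pw Iw. apply (periodic_y_solution_unique r1 r2 zp w nu m); auto.
  - exists (RInt (mean_integrand r1 r2 zp mu) 0 (2 * PI)). split.
    + apply is_RInt_ext with (mean_integrand r1 r2 zp mu).
      { intros s _. unfold mean_integrand, y. rewrite sqrt_sq_plus_sinh by lra. auto. }
      apply (RInt_correct (V:=R_CompleteNormedModule)). apply mean_integrand_ex_RInt; auto.
    + intros x1 x2 X1 X2 Hx. apply (growth_rate_limit r1 r2 zp nu mu M1 M2 ((M1 + M2) / m)); auto.
Qed.
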